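(* Let $p\in(0,\infty)$. The following are equivalent: (i) $p\in(0,1)$; (ii) $\mathcal{U}_p(P)<\infty$ for every simple polygon $P\subset\mathbb{R}^n$ with finitely many vertices; (iii) there is a non-degenerate simple closed polygon $P$ with $\mathcal{U}_p(P)<\infty$.
   Context: A simple polygon with finitely many vertices is a subset of $\mathbb{R}^n$ which is a finite union of straight line segments forming either a simple polygonal arc or a simple closed polygonal curve; a non-degenerate simple closed polygon is a simple closed polygonal curve (with finitely many vertices, not contained in a line). For a set $X\subset\mathbb{R}^n$ and $x,y,z\in X$ define $\kappa(x,y,z)=1/r(x,y,z)$ if $x,y,z$ are pairwise distinct and $\kappa(x,y,z)=0$ otherwise, where $r(x,y,z)$ is the circumradius of $x,y,z$ (with $r=\infty$, i.e. $\kappa=0$, for collinear distinct points). Let $\kappa_G(x)=\sup_{y,z\in X}\kappa(x,y,z)$ and, with $\mathcal{H}^1$ the one-dimensional Hausdorff measure restricted to $X$, $\mathcal{U}_p(X)=\int_X\kappa_G^p(x)\,d\mathcal{H}^1(x)$. *)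

From Stdlib Require Import Reals.
Open Scope R_scope.

(** Points of R^n are represented as functions [nat -> R] vanishing at all
    coordinates [>= n]; [in_Rn n x] expresses that x is such a point. *)
Definition pt := nat -> R.
Definition in_Rn (n : nat) (x : pt) : Prop := forall i, (n <= i)%nat -> x i = 0.

Fixpoint rsum (k : nat) (f : nat -> R) : R :=
  match k with O => 0 | S k' => rsum k' f + f k' end.

Definition dot (n : nat) (x y : pt) : R := rsum n (fun i => x i * y i).
Definition vsub (x y : pt) : pt := fun i => x i - y i.
Definition norm (n : nat) (x : pt) : R := sqrt (dot n x x).
Definition dist (n : nat) (x y : pt) : R := norm n (vsub x y).

(** For pairwise distinct x, y, z: 1 / circumradius = 4 Area / (|x-y||y-z||z-x|),
    with Area = (1/2) sqrt(|a|^2|b|^2 - (a.b)^2), a = y - x, b = z - x.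
    (Gives 0 for collinear distinct points, i.e. r = infinity.) *)
Definition curv (n : nat) (x y z : pt) : R :=
  let a := vsub y x in let b := vsub z x in
  2 * sqrt (dot n a a * dot n b b - (dot n a b) ^ 2)
    / (dist n x y * dist n y z * dist n z x).

(** Superlevel set {x in X | kappa_G(x)^p > t}, for t >= 0, where
    kappa_G(x) = sup_{y,z in X} kappa(x,y,z) and kappa = 0 unless x,y,z are
    pairwise distinct. *)
Definition superlevel (n : nat) (X : pt -> Prop) (p t : R) : pt -> Prop :=
  fun x => X x /\ exists y z, X y /\ X z /\ x <> y /\ y <> z /\ x <> z /\
             0 < curv n x y z /\ t < Rpower (curv n x y z) p.

(** Hausdorff measure H^1 (normalised as sum of diameters), via predicates. *)
Definition Hdelta_le (n : nat) (A : pt -> Prop) (delta c : R) : Prop :=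
  forall eps, 0 < eps ->
  exists (C : nat -> pt -> Prop) (d : nat -> R),
    (forall x, A x -> exists i, C i x) /\
    (forall i, 0 <= d i <= delta /\
               forall x y, C i x -> C i y -> dist n x y <= d i) /\
    (forall N, rsum N d <= c + eps).

Definition H1_le (n : nat) (A : pt -> Prop) (c : R) : Prop :=
  forall delta, 0 < delta -> Hdelta_le n A delta c.

(** c <= H^1(A)  (H^1(A) may be +infinity) *)
Definition H1_ge (n : nat) (A : pt -> Prop) (c : R) : Prop :=
  forall c', c' < c -> ~ H1_le n A c'.

(** U_p(X) < infinity, where U_p(X) = int_X kappa_G^p dH^1 is computed by the
    layer-cake formula  int_0^infty H^1({kappa_G^p > t}) dt, the integral of
    the nonincreasing [0,infty]-valued function t |-> H^1({kappa_G^p > t})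
    being the supremum of its lower (right-endpoint) sums. *)
Definition Up_finite (n : nat) (X : pt -> Prop) (p : R) : Prop :=
  exists M, forall (k : nat) (t c : nat -> R),
    t O = 0 -> (forall i, t i < t (S i)) ->
    (forall i, (i < k)%nat -> H1_ge n (superlevel n X p (t (S i))) (c (S i))) ->
    rsum k (fun i => (t (S i) - t i) * c (S i)) <= M.

Definition seg_pt (v : nat -> pt) (i : nat) (s : R) : pt :=
  fun k => v i k + s * (v (S i) k - v i k).

Definition polyline (v : nat -> pt) (m : nat) : pt -> Prop :=
  fun x => exists i s, (i < m)%nat /\ 0 <= s <= 1 /\ x = seg_pt v i s.

(** Simple polygonal arc with vertices v_0..v_m (m >= 1): the piecewise linear
    parametrisation is injective (segments meet only at shared consecutive
    endpoints). *)
Definition simple_arc (n : nat) (X : pt -> Prop) : Prop :=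
  exists (v : nat -> pt) (m : nat),
    (1 <= m)%nat /\ (forall i, (i <= m)%nat -> in_Rn n (v i)) /\
    (forall i, (i < m)%nat -> v i <> v (S i)) /\
    (forall i j s t, (i < m)%nat -> (j < m)%nat -> 0 <= s <= 1 -> 0 <= t <= 1 ->
       seg_pt v i s = seg_pt v j t ->
       (i = j /\ s = t) \/ (j = S i /\ s = 1 /\ t = 0) \/ (i = S j /\ s = 0 /\ t = 1)) /\
    (forall x, X x <-> polyline v m x).

(** Simple closed polygonal curve with vertices v_0..v_m, v_m = v_0, m >= 3:
    the parametrisation is injective on [0,m). *)
Definition simple_closed (n : nat) (X : pt -> Prop) : Prop :=
  exists (v : nat -> pt) (m : nat),
    (3 <= m)%nat /\ (forall i, (i <= m)%nat -> in_Rn n (v i)) /\ v m = v O /\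
    (forall i, (i < m)%nat -> v i <> v (S i)) /\
    (forall i j s t, (i < m)%nat -> (j < m)%nat -> 0 <= s <= 1 -> 0 <= t <= 1 ->
       seg_pt v i s = seg_pt v j t ->
       (i = j /\ s = t) \/ (j = S i /\ s = 1 /\ t = 0) \/ (i = S j /\ s = 0 /\ t = 1)
       \/ (i = O /\ j = pred m /\ s = 0 /\ t = 1)
       \/ (j = O /\ i = pred m /\ t = 0 /\ s = 1)) /\
    (forall x, X x <-> polyline v m x).

Definition simple_polygon (n : nat) (X : pt -> Prop) : Prop :=
  simple_arc n X \/ simple_closed n X.

Definition nondegenerate (X : pt -> Prop) : Prop :=
  ~ exists a d : pt, forall x, X x -> exists l : R, forall k, x k = a k + l * d k.

(* For p < 1, a point x of a simple polygon with large global curvature lies near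
   a vertex: in a triangle x y z of positive curvature one of y, z, say w, lies off
   the line of the edge through x, the curvature is at most 2 / |x - w|, and since
   adjacent edges are transversal and non-adjacent ones are at positive distance,
   |x - w| is at least a fixed multiple of the distance of x to the endpoints of its
   edge.  Hence H^1({kappa_G^p > t}) <= C min(1, t^(-1/p)), which is integrable
   because 1/p > 1.  For p >= 1, at a corner between consecutive edges e and f the
   points at parameter a before and after the vertex form with it a triangle of
   curvature K / a, so H^1({kappa_G^p > t}) >= c min(1, t^(-1/p)) >= c / t for
   t >= 1 and the layer-cake sum dominates the harmonic series.  A closed polygon
   without corners lies on a line. *)

From Stdlib Require Import Reals Lra Lia Psatz FunctionalExtensionality List Classical ClassicalEpsilon ZArith.
(* Imported last, so that [dist] is the Euclidean distance of Defs and not Stdlib's metric-space one. *)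
From Pilot Require Import Defs.
Open Scope R_scope.

(** * Finite sums *)

Lemma rsum_ext k f g : (forall i, (i < k)%nat -> f i = g i) -> rsum k f = rsum k g.
Proof.
  induction k; simpl; intros H; auto.
  rewrite IHk by (intros; apply H; lia). rewrite (H k) by lia. reflexivity.
Qed.

Lemma rsum_add k f g : rsum k (fun i => f i + g i) = rsum k f + rsum k g.
Proof. induction k; simpl; [lra|]. rewrite IHk; ring. Qed.

Lemma rsum_scal k a f : rsum k (fun i => a * f i) = a * rsum k f.
Proof. induction k; simpl; [ring|]. rewrite IHk; ring. Qed.

Lemma rsum_const k c : rsum k (fun _ => c) = INR k * c.
Proof. induction k; simpl rsum; [simpl; ring|]. rewrite IHk, S_INR. ring. Qed.

Lemma rsum_const0 k : rsum k (fun _ => 0) = 0.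
Proof. rewrite rsum_const. ring. Qed.

Lemma rsum_le k f g : (forall i, (i < k)%nat -> f i <= g i) -> rsum k f <= rsum k g.
Proof.
  induction k; simpl; intros H; [lra|].
  assert (H1 := H k ltac:(lia)). assert (rsum k f <= rsum k g) by (apply IHk; intros; apply H; lia). lra.
Qed.

Lemma rsum_nonneg k f : (forall i, (i < k)%nat -> 0 <= f i) -> 0 <= rsum k f.
Proof. intros H. rewrite <- (rsum_const0 k). apply rsum_le; auto. Qed.

Lemma rsum_le_incr k k' f : (k <= k')%nat -> (forall i, 0 <= f i) -> rsum k f <= rsum k' f.
Proof. intros H Hf. induction H; [lra|]. simpl. specialize (Hf m). lra. Qed.

Lemma rsum_le_support M K f :
  (forall k, (K <= k)%nat -> f k = 0) -> (forall k, 0 <= f k) -> rsum M f <= rsum K f.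
Proof.
  intros H0 Hp. induction M; simpl.
  - apply rsum_nonneg; auto.
  - destruct (Nat.lt_ge_cases M K).
    + apply (rsum_le_incr (S M) K f); auto; lia.
    + rewrite H0 by auto. lra.
Qed.

Lemma rsum_telescope k g : rsum k (fun i => g i - g (S i)) = g O - g k.
Proof. induction k; simpl; [ring|]. rewrite IHk. ring. Qed.

Lemma rsum_geom_half N : rsum N (fun i => / 2 ^ (S i)) = 1 - / 2 ^ N.
Proof.
  induction N; [simpl; field|].
  change (rsum (S N) (fun i => / 2 ^ (S i))) with (rsum N (fun i => / 2 ^ (S i)) + / 2 ^ (S N)).
  rewrite IHN. simpl. field. apply pow_nonzero. lra.
Qed.

Definition interleave (f g : nat -> R) (k : nat) : R :=
  if Nat.even k then f (Nat.div2 k) else g (Nat.div2 k).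

Lemma even_double m : Nat.even (2 * m) = true.
Proof. rewrite Nat.even_mul. reflexivity. Qed.

Lemma even_succ_double m : Nat.even (S (2 * m)) = false.
Proof. rewrite Nat.even_succ, Nat.odd_mul. reflexivity. Qed.

Lemma rsum_interleave M f g : rsum (2 * M) (interleave f g) = rsum M f + rsum M g.
Proof.
  induction M; simpl; [ring|].
  replace (M + S (M + 0))%nat with (S (2 * M)) by lia. simpl.
  replace (M + (M + 0))%nat with (2 * M)%nat by lia. rewrite IHM.
  unfold interleave. rewrite even_double, even_succ_double, Nat.div2_double, Nat.div2_succ_double.
  ring.
Qed.

(** * Euclidean geometry in coordinates *)

Lemma dot_ext n u u' w w' : (forall i, (i < n)%nat -> u i = u' i) ->
  (forall i, (i < n)%nat -> w i = w' i) -> dot n u w = dot n u' w'.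
Proof. intros H1 H2. unfold dot. apply rsum_ext. intros i Hi. rewrite H1, H2; auto. Qed.

Lemma dot_self_nonneg n u : 0 <= dot n u u.
Proof. unfold dot. apply rsum_nonneg. intros. nra. Qed.

Lemma dot_self_eq0 n u : dot n u u = 0 -> forall i, (i < n)%nat -> u i = 0.
Proof.
  unfold dot. induction n; intros H i Hi; [lia|]. simpl in H.
  assert (0 <= rsum n (fun i => u i * u i)) by (apply rsum_nonneg; intros; nra).
  assert (0 <= u n * u n) by nra.
  destruct (Nat.eq_dec i n) as [->|]; [nra|].
  apply IHn; [lra| lia].
Qed.

Lemma dot_comb2 n a b c d e f :
  dot n (fun i => a * e i + b * f i) (fun i => c * e i + d * f i) =
  a * c * dot n e e + (a * d + b * c) * dot n e f + b * d * dot n f f.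
Proof.
  unfold dot. induction n; simpl; [ring|]. rewrite IHn. ring.
Qed.

Lemma dot_comb3 n a b c a' b' c' e f g :
  dot n (fun i => a * e i + b * f i + c * g i) (fun i => a' * e i + b' * f i + c' * g i) =
  a * a' * dot n e e + b * b' * dot n f f + c * c' * dot n g g
  + (a * b' + b * a') * dot n e f + (a * c' + c * a') * dot n e g + (b * c' + c * b') * dot n f g.
Proof.
  unfold dot. induction n; simpl; [ring|]. rewrite IHn. ring.
Qed.

Definition Gram n (e f : pt) : R := dot n e e * dot n f f - (dot n e f) ^ 2.

Lemma Gram_identity n e f :
  dot n (fun i => dot n f f * e i + (- dot n e f) * f i)
        (fun i => dot n f f * e i + (- dot n e f) * f i) = dot n f f * Gram n e f.
Proof. rewrite dot_comb2. unfold Gram. ring. Qed.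

Lemma Gram_nonneg n e f : 0 <= Gram n e f.
Proof.
  destruct (dot_self_nonneg n f) as [Hf|Hf].
  - assert (H := dot_self_nonneg n (fun i => dot n f f * e i + (- dot n e f) * f i)).
    rewrite Gram_identity in H. nra.
  - assert (Hz := dot_self_eq0 n f (eq_sym Hf)).
    assert (Hef : dot n e f = 0).
    { unfold dot. rewrite <- (rsum_const0 n). apply rsum_ext. intros i Hi. rewrite Hz; auto; ring. }
    unfold Gram. rewrite Hef, <- Hf. nra.
Qed.

Lemma Gram_eq0_parallel n e f : 0 < dot n f f -> Gram n e f = 0 ->
  forall i, (i < n)%nat -> e i = (dot n e f / dot n f f) * f i.
Proof.
  intros Hf HG i Hi.
  assert (H := Gram_identity n e f). rewrite HG, Rmult_0_r in H.
  assert (Hz := dot_self_eq0 _ _ H i Hi). simpl in Hz.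
  apply (Rmult_eq_reg_l (dot n f f)); [|lra].
  replace (dot n f f * (dot n e f / dot n f f * f i)) with (dot n e f * f i) by (field; lra). lra.
Qed.

Lemma Gram_le_dist_comb n e f a b : 0 < dot n f f ->
  a ^ 2 * Gram n e f / dot n f f <=
  dot n (fun i => a * e i + (- b) * f i) (fun i => a * e i + (- b) * f i).
Proof.
  intros Hf. rewrite dot_comb2. unfold Gram.
  apply Rmult_le_reg_l with (dot n f f); auto.
  replace (dot n f f * (a ^ 2 * (dot n e e * dot n f f - dot n e f ^ 2) / dot n f f))
    with (a ^ 2 * (dot n e e * dot n f f - dot n e f ^ 2)) by (field; lra).
  assert (0 <= (a * dot n e f - b * dot n f f) ^ 2) by apply pow2_ge_0.
  match goal with |- ?L <= ?R => assert (R - L = (a * dot n e f - b * dot n f f) ^ 2) by ring end.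
  lra.
Qed.

Lemma norm_mul_self n u : norm n u * norm n u = dot n u u.
Proof. apply sqrt_sqrt, dot_self_nonneg. Qed.

Lemma norm_ext n u u' : (forall i, (i < n)%nat -> u i = u' i) -> norm n u = norm n u'.
Proof. intros H. unfold norm. rewrite (dot_ext n u u' u u'); auto. Qed.

Lemma norm_scal n a u : norm n (fun i => a * u i) = Rabs a * norm n u.
Proof.
  unfold norm. rewrite (dot_ext n _ (fun i => a * u i + 0 * u i) _ (fun i => a * u i + 0 * u i))
    by (intros; ring).
  rewrite dot_comb2, <- sqrt_Rsqr_abs, <- sqrt_mult_alt by apply Rle_0_sqr.
  f_equal. unfold Rsqr. ring.
Qed.

Lemma norm_pos n u : (exists i, (i < n)%nat /\ u i <> 0) -> 0 < norm n u.
Proof.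
  intros [i [Hi Hu]]. unfold norm. apply sqrt_lt_R0.
  destruct (dot_self_nonneg n u); auto. exfalso. apply Hu. apply (dot_self_eq0 n u); auto.
Qed.

Lemma norm_eq0 n u : norm n u = 0 -> forall i, (i < n)%nat -> u i = 0.
Proof.
  intros H. apply dot_self_eq0. apply sqrt_eq_0; auto. apply dot_self_nonneg.
Qed.

Lemma norm_eq0_of n u : (forall k, (k < n)%nat -> u k = 0) -> norm n u = 0.
Proof.
  intros H. unfold norm. replace (dot n u u) with 0; [apply sqrt_0|].
  unfold dot. rewrite <- (rsum_const0 n). apply rsum_ext. intros; rewrite H; auto; ring.
Qed.

Lemma dot_self_pos n u : 0 < norm n u -> 0 < dot n u u.
Proof. intros H. rewrite <- norm_mul_self. nra. Qed.

Lemma dist_comm n x y : dist n x y = dist n y x.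
Proof. unfold dist, norm, dot. f_equal. apply rsum_ext. intros; unfold vsub; ring. Qed.

Lemma in_Rn_ext n x y : in_Rn n x -> in_Rn n y -> (forall i, (i < n)%nat -> x i = y i) -> x = y.
Proof.
  intros Hx Hy H. apply functional_extensionality. intros i.
  destruct (Nat.lt_ge_cases i n); auto. rewrite Hx, Hy; auto.
Qed.

Lemma dist_pos n x y : in_Rn n x -> in_Rn n y -> x <> y -> 0 < dist n x y.
Proof.
  intros Hx Hy Hne. destruct (sqrt_pos (dot n (vsub x y) (vsub x y))) as [H|H]; auto.
  exfalso. apply Hne. apply (in_Rn_ext n); auto. intros i Hi.
  assert (Hz := norm_eq0 n _ (eq_sym H) i Hi). unfold vsub in Hz. lra.
Qed.

Lemma dist_self n x : dist n x x = 0.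
Proof. apply norm_eq0_of. intros; unfold vsub; ring. Qed.

Definition line_pt (P e : pt) (s : R) : pt := fun k => P k + s * e k.

Lemma dist_line_pt n P e s s' : dist n (line_pt P e s) (line_pt P e s') = Rabs (s - s') * norm n e.
Proof. unfold dist. rewrite <- norm_scal. apply norm_ext. intros; unfold vsub, line_pt. ring. Qed.

(** * Menger curvature *)

Lemma curv_Gram n x y z :
  curv n x y z = 2 * sqrt (Gram n (vsub y x) (vsub z x)) / (dist n x y * dist n y z * dist n z x).
Proof. reflexivity. Qed.

Lemma Gram_triangle_at_y n x y z : Gram n (vsub y x) (vsub z x) = Gram n (vsub y x) (vsub z y).
Proof.
  set (a := vsub y x). set (c := vsub z y). unfold Gram.
  rewrite (dot_ext n (vsub z x) (fun i => 1 * a i + 1 * c i) (vsub z x) (fun i => 1 * a i + 1 * c i)),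
          (dot_ext n a (fun i => 1 * a i + 0 * c i) (vsub z x) (fun i => 1 * a i + 1 * c i)).
  1: rewrite !dot_comb2; ring.
  all: intros; unfold a, c, vsub; ring.
Qed.

Lemma Gram_triangle_at_z n x y z : Gram n (vsub y x) (vsub z x) = Gram n (vsub z x) (vsub z y).
Proof.
  set (b := vsub z x). set (c := vsub z y). unfold Gram.
  rewrite (dot_ext n (vsub y x) (fun i => 1 * b i + (-1) * c i) (vsub y x) (fun i => 1 * b i + (-1) * c i)),
          (dot_ext n (vsub y x) (fun i => 1 * b i + (-1) * c i) b (fun i => 1 * b i + 0 * c i)).
  1: rewrite !dot_comb2; ring.
  all: intros; unfold b, c, vsub; ring.
Qed.

Lemma sqrt_Gram_le n a b : sqrt (Gram n a b) <= norm n a * norm n b.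
Proof.
  unfold norm. rewrite <- sqrt_mult_alt by apply dot_self_nonneg.
  apply sqrt_le_1_alt. unfold Gram. nra.
Qed.

Lemma curv_le_of_sqrt_Gram n x y z A B C :
  0 < dist n x y -> 0 < dist n y z -> 0 < dist n z x ->
  sqrt (Gram n (vsub y x) (vsub z x)) <= A * B -> dist n x y * dist n y z * dist n z x = A * B * C ->
  curv n x y z <= 2 / C.
Proof.
  intros Hxy Hyz Hzx HS HD. rewrite curv_Gram, HD.
  assert (HABC : 0 < A * B * C) by (rewrite <- HD; repeat apply Rmult_lt_0_compat; auto).
  apply Rle_trans with (2 * (A * B) / (A * B * C)).
  - apply Rmult_le_compat_r; [left; apply Rinv_0_lt_compat; auto| lra].
  - right. field. repeat split; intros H0; rewrite H0 in HABC; lra.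
Qed.

Lemma curv_le_inv_dist_zx n x y z : 0 < dist n x y -> 0 < dist n y z -> 0 < dist n z x ->
  curv n x y z <= 2 / dist n z x.
Proof.
  intros Hxy Hyz Hzx. apply (curv_le_of_sqrt_Gram n x y z (dist n x y) (dist n y z)); auto.
  rewrite Gram_triangle_at_y, (dist_comm n x y), (dist_comm n y z). apply sqrt_Gram_le.
Qed.

Lemma curv_le_inv_dist_xy n x y z : 0 < dist n x y -> 0 < dist n y z -> 0 < dist n z x ->
  curv n x y z <= 2 / dist n x y.
Proof.
  intros Hxy Hyz Hzx. apply (curv_le_of_sqrt_Gram n x y z (dist n z x) (dist n y z)); auto.
  - rewrite Gram_triangle_at_z, (dist_comm n y z). apply sqrt_Gram_le.
  - ring.
Qed.

Lemma curv_collinear n x y z e a b :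
  (forall i, (i < n)%nat -> y i = x i + a * e i) ->
  (forall i, (i < n)%nat -> z i = x i + b * e i) -> curv n x y z = 0.
Proof.
  intros Hy Hz. rewrite curv_Gram.
  replace (Gram n (vsub y x) (vsub z x)) with 0; [rewrite sqrt_0; unfold Rdiv; ring|].
  unfold Gram.
  rewrite (dot_ext n (vsub y x) (fun i => a * e i + 0 * e i) (vsub y x) (fun i => a * e i + 0 * e i)),
          (dot_ext n (vsub z x) (fun i => b * e i + 0 * e i) (vsub z x) (fun i => b * e i + 0 * e i)),
          (dot_ext n (vsub y x) (fun i => a * e i + 0 * e i) (vsub z x) (fun i => b * e i + 0 * e i)).
  1: rewrite !dot_comb2; ring.
  all: intros; unfold vsub; try rewrite Hy by auto; try rewrite Hz by auto; ring.
Qed.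

Definition corner_curv n (e f : pt) : R :=
  2 * sqrt (Gram n e f) / (norm n e * norm n f * norm n (fun k => e k + f k)).

(* Walking the same parameter a back along e and forward along f from a vertex
   gives a triangle similar to (e, f) scaled by a, hence curvature scaled by 1/a. *)
Lemma curv_corner n P e f a : 0 < a ->
  0 < norm n e -> 0 < norm n f -> 0 < norm n (fun k => e k + f k) ->
  curv n (line_pt P (fun k => - e k) a) P (line_pt P f a) = corner_curv n e f / a.
Proof.
  intros Ha He Hf Hg.
  set (x := line_pt P (fun k => - e k) a). set (z := line_pt P f a).
  assert (Dxy : dist n x P = a * norm n e).
  { unfold dist. rewrite (norm_ext n _ (fun k => (- a) * e k)) by (intros; unfold x, line_pt, vsub; ring).
    rewrite norm_scal, Rabs_left; [ring| lra]. }
  assert (Dyz : dist n P z = a * norm n f).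
  { unfold dist. rewrite (norm_ext n _ (fun k => (- a) * f k)) by (intros; unfold z, line_pt, vsub; ring).
    rewrite norm_scal, Rabs_left; [ring| lra]. }
  assert (Dzx : dist n z x = a * norm n (fun k => e k + f k)).
  { unfold dist. rewrite (norm_ext n _ (fun k => a * (e k + f k))) by (intros; unfold z, x, line_pt, vsub; ring).
    rewrite norm_scal, Rabs_pos_eq; [ring| lra]. }
  assert (HG : Gram n (vsub P x) (vsub z x) = (a * a) * (a * a) * Gram n e f).
  { unfold Gram.
    rewrite (dot_ext n (vsub P x) (fun k => a * e k + 0 * f k) (vsub P x) (fun k => a * e k + 0 * f k)),
            (dot_ext n (vsub z x) (fun k => a * e k + a * f k) (vsub z x) (fun k => a * e k + a * f k)),
            (dot_ext n (vsub P x) (fun k => a * e k + 0 * f k) (vsub z x) (fun k => a * e k + a * f k)).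
    1: rewrite !dot_comb2; ring.
    all: intros; unfold x, z, line_pt, vsub; ring. }
  rewrite curv_Gram, Dxy, Dyz, Dzx, HG, sqrt_mult_alt, sqrt_square by nra.
  unfold corner_curv. field. repeat split; lra.
Qed.

(** * One-dimensional Hausdorff measure *)

Lemma H1_le_subset n (A B : pt -> Prop) c : (forall x, A x -> B x) -> H1_le n B c -> H1_le n A c.
Proof.
  intros HAB H delta Hd eps He. destruct (H delta Hd eps He) as [C [d [H1 [H2 H3]]]].
  exists C, d. split; auto.
Qed.

Lemma H1_le_empty n c : 0 <= c -> H1_le n (fun _ => False) c.
Proof.
  intros Hc delta Hd eps He. exists (fun _ _ => False), (fun _ => 0). split; [tauto|]. split.
  - intros i. split; [lra| tauto].
  - intros N. rewrite rsum_const0. lra.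
Qed.

Lemma H1_le_union n A B a b : H1_le n A a -> H1_le n B b -> H1_le n (fun x => A x \/ B x) (a + b).
Proof.
  intros HA HB delta Hd eps He.
  destruct (HA delta Hd (eps / 2) ltac:(lra)) as [C1 [d1 [H11 [H12 H13]]]].
  destruct (HB delta Hd (eps / 2) ltac:(lra)) as [C2 [d2 [H21 [H22 H23]]]].
  exists (fun k => if Nat.even k then C1 (Nat.div2 k) else C2 (Nat.div2 k)), (interleave d1 d2).
  split; [|split].
  - intros x [Hx|Hx].
    + destruct (H11 x Hx) as [i Hi]. exists (2 * i)%nat. rewrite even_double, Nat.div2_double. auto.
    + destruct (H21 x Hx) as [i Hi]. exists (S (2 * i))%nat.
      rewrite even_succ_double, Nat.div2_succ_double. auto.
  - intros k. unfold interleave. destruct (Nat.even k); auto.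
  - intros N. assert (Hnn : forall k, 0 <= interleave d1 d2 k).
    { intros k; unfold interleave; destruct (Nat.even k); [apply H12|apply H22]. }
    apply Rle_trans with (rsum (2 * N) (interleave d1 d2)).
    + apply rsum_le_incr; auto. lia.
    + rewrite rsum_interleave. specialize (H13 N). specialize (H23 N). lra.
Qed.

Lemma H1_le_bigunion n m (A : nat -> pt -> Prop) (a : nat -> R) :
  (forall i, (i < m)%nat -> H1_le n (A i) (a i)) ->
  (forall i, (i < m)%nat -> 0 <= a i) ->
  H1_le n (fun x => exists i, (i < m)%nat /\ A i x) (rsum m a).
Proof.
  induction m; intros H Ha.
  - apply H1_le_subset with (fun _ => False); [intros x [i [Hi _]]; lia| apply H1_le_empty; simpl; lra].
  - apply H1_le_subset with (fun x => (exists i, (i < m)%nat /\ A i x) \/ A m x).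
    + intros x [i [Hi Hx]]. destruct (Nat.eq_dec i m) as [->|]; auto.
      left; exists i; split; auto; lia.
    + apply H1_le_union; [apply IHm; intros; [apply H|apply Ha]; lia| apply H; lia].
Qed.

Lemma exists_piece al h N s : 0 <= h -> al <= s <= al + INR N * h ->
  exists k, (k <= N)%nat /\ al + INR k * h <= s <= al + (INR k + 1) * h.
Proof.
  intros Hh Hs. destruct Hh as [Hh|<-].
  - assert (Hq : 0 <= (s - al) / h) by (apply Rle_mult_inv_pos; lra).
    destruct (base_Int_part ((s - al) / h)) as [H1 H2].
    assert (Hz : (0 <= Int_part ((s - al) / h))%Z).
    { assert (Hl : (-1 < Int_part ((s - al) / h))%Z) by (apply lt_IZR; simpl; lra). lia. }
    exists (Z.to_nat (Int_part ((s - al) / h))). rewrite INR_IZR_INZ, Z2Nat.id by auto.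
    set (k := IZR (Int_part ((s - al) / h))) in *.
    assert (Hk : k * h <= s - al < (k + 1) * h).
    { split.
      - apply Rmult_le_compat_r with (r := h) in H1; [|lra].
        replace ((s - al) / h * h) with (s - al) in H1 by (field; lra). lra.
      - assert (H3 : (s - al) / h < k + 1) by lra.
        apply Rmult_lt_compat_r with (r := h) in H3; [|lra].
        replace ((s - al) / h * h) with (s - al) in H3 by (field; lra). lra. }
    split; [|lra].
    apply Nat2Z.inj_le. rewrite Z2Nat.id by auto. apply le_IZR. rewrite <- INR_IZR_INZ.
    fold k. apply Rmult_le_reg_r with h; lra.
  - exists O. split; [lia| simpl; lra].
Qed.

(* Cut the segment into N pieces of parameter length h with N h |e| slightly
   more than its length. *)
Lemma H1_le_segment n P e al be : al <= be ->
  H1_le n (fun x => exists s, al <= s <= be /\ x = line_pt P e s) ((be - al) * norm n e).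
Proof.
  intros Hab delta Hd eps He.
  assert (Hen : 0 <= norm n e) by apply sqrt_pos.
  assert (Hmin : 0 < Rmin delta eps) by (apply Rmin_pos; auto).
  destruct (INR_unbounded ((be - al) * norm n e / Rmin delta eps)) as [N0 HN0].
  set (N := S N0).
  assert (HN : 0 < INR N) by (unfold N; rewrite S_INR; assert (0 <= INR N0) by apply pos_INR; lra).
  set (h := (be - al) / INR N).
  assert (Hh : 0 <= h) by (apply Rle_mult_inv_pos; lra).
  assert (HhN : INR N * h = be - al) by (unfold h; field; lra).
  assert (Hhe : h * norm n e <= Rmin delta eps).
  { assert (INR N0 <= INR N) by (unfold N; rewrite S_INR; lra).
    apply Rmult_le_reg_l with (INR N); auto.
    rewrite <- Rmult_assoc, HhN.
    apply Rmult_le_reg_r with (/ Rmin delta eps); [apply Rinv_0_lt_compat; auto|].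
    replace (INR N * Rmin delta eps * / Rmin delta eps) with (INR N) by (field; lra).
    unfold Rdiv in HN0. lra. }
  assert (Hd1 := Rmin_l delta eps). assert (Hd2 := Rmin_r delta eps).
  exists (fun k x => (k <= N)%nat /\ exists s, al + INR k * h <= s <= al + (INR k + 1) * h /\ x = line_pt P e s),
         (fun k => if le_dec k N then h * norm n e else 0).
  split; [|split].
  - intros x [s [Hs ->]].
    destruct (exists_piece al h N s Hh ltac:(lra)) as [k [Hk Hks]].
    exists k. split; auto. exists s. auto.
  - intros k. destruct (le_dec k N).
    + split; [split; [apply Rmult_le_pos; auto| lra]|].
      intros x y [_ [s [Hs ->]]] [_ [s' [Hs' ->]]]. rewrite dist_line_pt.
      apply Rmult_le_compat_r; auto. apply Rabs_le. lra.
    + split; [lra|]. intros x y [Hk _]. lia.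
  - intros M. apply Rle_trans with (rsum (S N) (fun k => if le_dec k N then h * norm n e else 0)).
    + apply rsum_le_support.
      * intros k Hk. destruct (le_dec k N); auto; lia.
      * intros k. destruct (le_dec k N); [apply Rmult_le_pos; auto| lra].
    + rewrite (rsum_ext _ _ (fun _ => h * norm n e)) by (intros k Hk; destruct (le_dec k N); auto; lia).
      rewrite rsum_const, S_INR.
      replace ((INR N + 1) * (h * norm n e)) with ((be - al) * norm n e + h * norm n e)
        by (rewrite <- HhN; ring).
      lra.
Qed.

Lemma H1_ge_le n A c b : H1_ge n A c -> H1_le n A b -> c <= b.
Proof. intros H1 H2. destruct (Rle_dec c b); auto. exfalso. apply (H1 b); auto. lra. Qed.

Lemma H1_ge_subset n (A B : pt -> Prop) c : (forall x, A x -> B x) -> H1_ge n A c -> H1_ge n B c.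
Proof. intros HAB H c' Hc HB. apply (H c' Hc). eapply H1_le_subset; eauto. Qed.

Lemma interval_cover_finite (L U : nat -> R) a b : a <= b ->
  (forall y, a <= y <= b -> exists i, L i < y < U i) ->
  exists N, forall y, a <= y <= b -> exists i, (i < N)%nat /\ L i < y < U i.
Proof.
  intros Hab Hc.
  set (E := fun x => a <= x <= b /\
              exists N, forall y, a <= y <= x -> exists i, (i < N)%nat /\ L i < y < U i).
  assert (Ea : E a).
  { split; [lra|]. destruct (Hc a ltac:(lra)) as [i Hi]. exists (S i). intros y Hy.
    exists i. split; [lia|]. replace y with a by lra. auto. }
  assert (Hb : bound E) by (exists b; intros x [Hx _]; lra).
  destruct (completeness E Hb (ex_intro _ a Ea)) as [s [Hs1 Hs2]].
  assert (Has : a <= s) by (apply Hs1; auto).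
  assert (Hsb : s <= b) by (apply Hs2; intros x [Hx _]; lra).
  destruct (Hc s ltac:(lra)) as [j Hj].
  assert (Hx : exists x, E x /\ L j < x).
  { destruct (classic (exists x, E x /\ L j < x)) as [H|H]; auto. exfalso.
    assert (s <= L j).
    { apply Hs2. intros x Ex. destruct (Rle_dec x (L j)); auto.
      exfalso. apply H. exists x; split; auto; lra. }
    lra. }
  destruct Hx as [x [[Hx1 [N HN]] Hxj]].
  assert (Ex' : forall x', s <= x' < U j -> x' <= b -> E x').
  { intros x' Hx' Hx'b. split; [lra|]. exists (Nat.max N (S j)). intros y Hy.
    destruct (Rle_dec y x).
    - destruct (HN y ltac:(lra)) as [i [Hi Hi2]]. exists i. split; auto. lia.
    - exists j. split; [lia|]. lra. }
  destruct (Rle_dec b ((s + U j) / 2)).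
  - assert (E b) as [_ [N' HN']] by (apply Ex'; lra). exists N'. intros y Hy; apply HN'; lra.
  - exfalso. assert (E ((s + U j) / 2)) by (apply Ex'; lra). assert (Hle := Hs1 _ H). lra.
Qed.

Definition total_length (l : list (R * R)) : R :=
  fold_right (fun I acc => Rmax 0 (snd I - fst I) + acc) 0 l.

Lemma total_length_app l1 l2 : total_length (l1 ++ l2) = total_length l1 + total_length l2.
Proof. induction l1; simpl; [ring|]. rewrite IHl1. ring. Qed.

Lemma total_length_nonneg l : 0 <= total_length l.
Proof. induction l; simpl; [lra|]. assert (H := Rmax_l 0 (snd a - fst a)). lra. Qed.

(* Induction on the number of intervals: the one containing the right end x
   reduces the problem to [a, fst I]. *)
Lemma cover_total_length : forall k l, (length l <= k)%nat -> forall a x, a <= x ->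
  (forall y, a <= y <= x -> exists I, In I l /\ fst I < y < snd I) -> x - a <= total_length l.
Proof.
  induction k; intros l Hl a x Hax Hc.
  - destruct l; [|simpl in Hl; lia]. destruct (Hc a ltac:(lra)) as [I [[] _]].
  - destruct (Hc x ltac:(lra)) as [I [HI HIx]].
    destruct (in_split I l HI) as [l1 [l2 ->]].
    rewrite total_length_app. simpl.
    assert (Hm := Rmax_r 0 (snd I - fst I)).
    assert (H1 := total_length_nonneg l1). assert (H2 := total_length_nonneg l2).
    destruct (Rlt_le_dec (fst I) a); [lra|].
    assert (fst I - a <= total_length (l1 ++ l2)).
    { apply (IHk (l1 ++ l2)); auto.
      - rewrite length_app in *. simpl in Hl. lia.
      - intros y Hy. destruct (Hc y ltac:(lra)) as [J [HJ HJy]]. exists J. split; auto.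
        apply in_app_or in HJ. apply in_or_app. destruct HJ as [HJ|[HJ|HJ]]; auto.
        subst. lra. }
    rewrite total_length_app in H. lra.
Qed.

Lemma interval_cover_length (L U : nat -> R) a b : a <= b ->
  (forall y, a <= y <= b -> exists i, L i < y < U i) ->
  exists N, b - a <= rsum N (fun i => Rmax 0 (U i - L i)).
Proof.
  intros Hab Hc. destruct (interval_cover_finite L U a b Hab Hc) as [N HN]. exists N.
  replace (rsum N (fun i => Rmax 0 (U i - L i))) with (total_length (map (fun i => (L i, U i)) (seq 0 N))).
  - apply (cover_total_length (length (map (fun i => (L i, U i)) (seq 0 N)))); auto.
    intros y Hy. destruct (HN y Hy) as [i [Hi Hy']]. exists (L i, U i). split; auto.
    apply (in_map (fun i => (L i, U i))). apply in_seq. lia.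
  - clear. induction N; [reflexivity|].
    rewrite seq_S, map_app, total_length_app, IHN. simpl. ring.
Qed.

(* A set of diameter d meeting the segment lies within parameter distance d/|e|
   of a chosen parameter; widening by ep/2^(i+1) makes these intervals open. *)
Lemma segment_cover_sum_ge n P e eta (C : nat -> pt -> Prop) (d : nat -> R) ep :
  0 < norm n e -> 0 < ep < eta / 2 ->
  (forall s, 0 < s < eta -> exists i, C i (line_pt P e s)) ->
  (forall i, 0 <= d i /\ forall x y, C i x -> C i y -> dist n x y <= d i) ->
  exists N, (eta - 4 * ep) * norm n e <= 2 * rsum N d.
Proof.
  intros He Hep Hcov Hd.
  set (T := fun i s => 0 < s < eta /\ C i (line_pt P e s)).
  assert (Hsel : forall i, exists s, (exists s', T i s') -> T i s).
  { intros i. destruct (classic (exists s', T i s')) as [[s' Hs']|Hn]; [exists s'| exists 0]; tauto. }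
  set (sel := fun i => proj1_sig (constructive_indefinite_description _ (Hsel i))).
  assert (Hselp : forall i, (exists s', T i s') -> T i (sel i)).
  { intros i. unfold sel. destruct (constructive_indefinite_description _ (Hsel i)). auto. }
  set (w := fun i : nat => ep / 2 ^ (S i)).
  assert (Hw : forall i, 0 < w i) by (intros i; apply Rdiv_pos_pos; [lra| apply pow_lt; lra]).
  set (r := fun i => d i / norm n e).
  assert (Hr : forall i, 0 <= r i) by (intros i; apply Rle_mult_inv_pos; [apply Hd| lra]).
  destruct (interval_cover_length (fun i => sel i - r i - w i) (fun i => sel i + r i + w i)
              ep (eta - ep)) as [N HN].
  - lra.
  - intros y Hy. assert (Hy0 : 0 < y < eta) by lra.
    destruct (Hcov y Hy0) as [i Hi].
    exists i. assert (HT : T i (sel i)) by (apply Hselp; exists y; split; auto).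
    destruct HT as [_ HTi]. destruct (Hd i) as [_ Hdiam].
    assert (Hdd := Hdiam _ _ Hi HTi). rewrite dist_line_pt in Hdd.
    assert (Hyr : Rabs (y - sel i) <= r i).
    { unfold r. apply Rmult_le_reg_r with (norm n e); auto.
      replace (d i / norm n e * norm n e) with (d i) by (field; lra). auto. }
    assert (Hwi := Hw i). unfold Rabs in Hyr. destruct (Rcase_abs (y - sel i)); split; lra.
  - exists N.
    rewrite (rsum_ext N _ (fun i => (2 / norm n e) * d i + 2 * ep * / 2 ^ (S i))) in HN.
    2: { intros i _. rewrite Rmax_right.
         - unfold r, w. field. split; [apply pow_nonzero| ]; lra.
         - assert (Hwi := Hw i). assert (Hri := Hr i). lra. }
    rewrite rsum_add, rsum_scal, rsum_scal, rsum_geom_half in HN.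
    assert (0 < / 2 ^ N) by (apply Rinv_0_lt_compat, pow_lt; lra).
    assert (2 * ep * (1 - / 2 ^ N) <= 2 * ep) by nra.
    assert (H2 : eta - 4 * ep <= 2 / norm n e * rsum N d) by lra.
    apply Rmult_le_compat_r with (r := norm n e) in H2; [|lra].
    replace (2 / norm n e * rsum N d * norm n e) with (2 * rsum N d) in H2 by (field; lra).
    exact H2.
Qed.

Lemma H1_segment_ge n P e eta c : 0 < norm n e -> 0 < eta ->
  H1_le n (fun x => exists s, 0 < s < eta /\ x = line_pt P e s) c -> eta * norm n e <= 2 * c.
Proof.
  intros He Heta H. apply Rle_plus_epsilon. intros eps Heps.
  set (ep := Rmin (eta / 4) (eps / (8 * norm n e))).
  assert (Hep : 0 < ep) by (apply Rmin_pos; [lra| apply Rdiv_pos_pos; lra]).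
  assert (Hep1 := Rmin_l (eta / 4) (eps / (8 * norm n e))). fold ep in Hep1.
  assert (Hep2 : 4 * ep * norm n e <= eps / 2).
  { assert (H2 := Rmin_r (eta / 4) (eps / (8 * norm n e))). fold ep in H2.
    apply Rmult_le_compat_r with (r := 4 * norm n e) in H2; [|lra].
    replace (eps / (8 * norm n e) * (4 * norm n e)) with (eps / 2) in H2 by (field; lra). lra. }
  destruct (H 1 ltac:(lra) (eps / 4) ltac:(lra)) as [C [d [Hcov [Hd Hsum]]]].
  destruct (segment_cover_sum_ge n P e eta C d ep He ltac:(lra)) as [N HN].
  - intros s Hs. apply Hcov. exists s. auto.
  - intros i. destruct (Hd i) as [[Hd0 _] Hdiam]. auto.
  - specialize (Hsum N). lra.
Qed.

(** * Estimates for the layer-cake sums *)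

Lemma Rpower_pos x y : 0 < Rpower x y.
Proof. apply exp_pos. Qed.

Lemma ln_le_sub_1 x : 0 < x -> ln x <= x - 1.
Proof. intros H. assert (Hl := exp_ineq1_le (ln x)). rewrite exp_ln in Hl; lra. Qed.

Lemma ln_div x y : 0 < x -> 0 < y -> ln (x / y) = ln x - ln y.
Proof. intros. unfold Rdiv. rewrite ln_mult, ln_Rinv; auto. apply Rinv_0_lt_compat; auto. Qed.

(* Right-endpoint Riemann sum of s^(-q) on [A, B] against the antiderivative. *)
Lemma Rpower_tangent_le A B q : 0 < A -> A <= B -> 1 < q ->
  (B - A) * Rpower B (- q) <= (Rpower A (1 - q) - Rpower B (1 - q)) / (q - 1).
Proof.
  intros HA HAB Hq. unfold Rpower.
  assert (HB : 0 < B) by lra.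
  set (a := ln A). set (b := ln B).
  assert (E1 : exp ((1 - q) * a) = exp ((1 - q) * b) * exp ((1 - q) * (a - b))).
  { rewrite <- exp_plus. f_equal. ring. }
  assert (Hab : a - b <= A / B - 1).
  { unfold a, b. rewrite <- ln_div by auto. apply ln_le_sub_1. apply Rdiv_pos_pos; auto. }
  assert (E2 : 1 + (1 - q) * (a - b) <= exp ((1 - q) * (a - b))) by apply exp_ineq1_le.
  assert (E3 : (q - 1) * (1 - A / B) <= (1 - q) * (a - b)) by nra.
  assert (E4 : exp (- q * b) = exp ((1 - q) * b) / B).
  { unfold b. replace (- q * ln B) with ((1 - q) * ln B + - ln B) by ring.
    rewrite exp_plus, exp_Ropp, exp_ln; auto. }
  rewrite E1, E4. set (Z := exp ((1 - q) * b)). assert (HZ : 0 < Z) by apply exp_pos.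
  apply Rmult_le_reg_r with (q - 1); [lra|].
  replace ((Z * exp ((1 - q) * (a - b)) - Z) / (q - 1) * (q - 1))
    with (Z * (exp ((1 - q) * (a - b)) - 1)) by (field; lra).
  replace ((B - A) * (Z / B) * (q - 1)) with (Z * ((q - 1) * (1 - A / B))) by (field; lra).
  apply Rmult_le_compat_l; lra.
Qed.

Lemma increasing_from_0_nonneg (t : nat -> R) :
  t O = 0 -> (forall i, t i < t (S i)) -> forall i, 0 <= t i.
Proof. intros H0 H i. induction i; [lra|]. specialize (H i). lra. Qed.

Lemma layer_sum_le_of_decay (t c : nat -> R) q K k : 1 < q -> 0 <= K ->
  t O = 0 -> (forall i, t i < t (S i)) ->
  (forall i, (i < k)%nat -> c (S i) <= K * Rpower (1 + t (S i)) (- q)) ->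
  rsum k (fun i => (t (S i) - t i) * c (S i)) <= K / (q - 1).
Proof.
  intros Hq HK H0 Hinc Hc.
  assert (Ht := increasing_from_0_nonneg t H0 Hinc).
  set (F := fun i => K / (q - 1) * Rpower (1 + t i) (1 - q)).
  apply Rle_trans with (rsum k (fun i => F i - F (S i))).
  - apply rsum_le. intros i Hi. unfold F.
    assert (Hti := Ht i). assert (Hinc' := Hinc i).
    assert (Htan := Rpower_tangent_le (1 + t i) (1 + t (S i)) q ltac:(lra) ltac:(lra) Hq).
    apply Rle_trans with ((t (S i) - t i) * (K * Rpower (1 + t (S i)) (- q))).
    + apply Rmult_le_compat_l; [lra| auto].
    + replace ((t (S i) - t i) * (K * Rpower (1 + t (S i)) (- q))) with
        (K * ((1 + t (S i) - (1 + t i)) * Rpower (1 + t (S i)) (- q))) by ring.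
      apply Rle_trans with (K * ((Rpower (1 + t i) (1 - q) - Rpower (1 + t (S i)) (1 - q)) / (q - 1))).
      * apply Rmult_le_compat_l; auto.
      * right. field. lra.
  - rewrite rsum_telescope. unfold F. rewrite H0, Rplus_0_r.
    replace (Rpower 1 (1 - q)) with 1 by (unfold Rpower; rewrite ln_1, Rmult_0_r, exp_0; auto).
    assert (0 <= K / (q - 1) * Rpower (1 + t k) (1 - q)).
    { apply Rmult_le_pos; [apply Rle_mult_inv_pos; lra| left; apply Rpower_pos]. }
    lra.
Qed.

Lemma Rpower_Ropp_le_contravar x y q : 0 < x -> x <= y -> 0 <= q -> Rpower y (- q) <= Rpower x (- q).
Proof.
  intros Hx Hxy Hq. rewrite !Rpower_Ropp. apply Rinv_le_contravar; [apply Rpower_pos|].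
  apply Rle_Rpower_l; auto; lra.
Qed.

Lemma decay_of_two_bounds c t Lam Kc q : 0 < t -> 0 <= Lam -> 0 <= Kc -> 0 < q ->
  c <= Lam -> c <= Kc * Rpower t (- q) -> c <= Rpower 2 q * (Lam + Kc) * Rpower (1 + t) (- q).
Proof.
  intros Ht HL HK Hq H1 H2.
  assert (Hinv : Rpower 2 q * Rpower 2 (- q) = 1).
  { rewrite <- Rpower_plus. replace (q + - q) with 0 by ring. apply Rpower_O; lra. }
  assert (P2 := Rpower_pos 2 q). assert (P2' := Rpower_pos 2 (- q)).
  destruct (Rle_dec t 1).
  - assert (Rpower 2 (- q) <= Rpower (1 + t) (- q)) by (apply Rpower_Ropp_le_contravar; lra).
    apply Rle_trans with Lam; auto.
    apply Rle_trans with (Rpower 2 q * (Lam + Kc) * Rpower 2 (- q)).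
    + replace (Rpower 2 q * (Lam + Kc) * Rpower 2 (- q))
        with ((Lam + Kc) * (Rpower 2 q * Rpower 2 (- q))) by ring.
      rewrite Hinv. lra.
    + apply Rmult_le_compat_l; auto. apply Rmult_le_pos; lra.
  - assert (Rpower (2 * t) (- q) <= Rpower (1 + t) (- q)) by (apply Rpower_Ropp_le_contravar; lra).
    rewrite <- Rpower_mult_distr in H by lra.
    apply Rle_trans with (Kc * Rpower t (- q)); auto.
    apply Rle_trans with (Rpower 2 q * (Lam + Kc) * (Rpower 2 (- q) * Rpower t (- q))).
    + replace (Rpower 2 q * (Lam + Kc) * (Rpower 2 (- q) * Rpower t (- q)))
        with ((Lam + Kc) * Rpower t (- q) * (Rpower 2 q * Rpower 2 (- q))) by ring.
      rewrite Hinv, Rmult_1_r.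
      assert (0 < Rpower t (- q)) by apply Rpower_pos. nra.
    + apply Rmult_le_compat_l; auto. apply Rmult_le_pos; lra.
Qed.

Lemma harmonic_ge_ln k : ln (INR (S k)) <= rsum k (fun i => / INR (S i)).
Proof.
  induction k; [simpl; rewrite ln_1; lra|].
  change (rsum (S k) (fun i => / INR (S i))) with (rsum k (fun i => / INR (S i)) + / INR (S k)).
  assert (H0 : 0 < INR (S k)) by (apply lt_0_INR; lia).
  assert (ln (INR (S (S k))) - ln (INR (S k)) <= / INR (S k)).
  { rewrite <- ln_div by (auto; apply lt_0_INR; lia).
    eapply Rle_trans; [apply ln_le_sub_1, Rdiv_pos_pos; auto; apply lt_0_INR; lia|].
    rewrite (S_INR (S k)). right. field. lra. }
  lra.
Qed.

Lemma harmonic_unbounded M : exists k, M < rsum k (fun i => / INR (S i)).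
Proof.
  destruct (INR_unbounded (exp (M + 1))) as [k Hk].
  exists k. eapply Rlt_le_trans; [|apply harmonic_ge_ln].
  assert (H : exp (M + 1) < INR (S k)) by (rewrite S_INR; lra).
  apply ln_increasing in H; [| apply exp_pos]. rewrite ln_exp in H. lra.
Qed.

(** * Distances between segments *)

Lemma lipschitz_continuity_pt f c K : 0 < K ->
  (forall x, Rabs (x - c) < 1 -> Rabs (f x - f c) <= K * Rabs (x - c)) -> continuity_pt f c.
Proof.
  intros HK H eps He. exists (Rmin 1 (eps / (2 * K))). split.
  - apply Rmin_pos; [lra| apply Rdiv_pos_pos; lra].
  - intros x [_ Hx]. simpl in *. unfold R_dist in *.
    assert (H1 := Rmin_l 1 (eps / (2 * K))). assert (H2 := Rmin_r 1 (eps / (2 * K))).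
    specialize (H x ltac:(lra)).
    assert (K * Rabs (x - c) <= K * (eps / (2 * K))) by (apply Rmult_le_compat_l; lra).
    replace (K * (eps / (2 * K))) with (eps / 2) in H0 by (field; lra). lra.
Qed.

(* The partial minimum h s = min_t F s t inherits the Lipschitz bound in s, hence
   is continuous and attains its minimum. *)
Lemma min_attained_square (F : R -> R -> R) K : 0 < K ->
  (forall s t, continuity_pt (F s) t) ->
  (forall s s' t, Rabs s <= 2 -> Rabs s' <= 2 -> 0 <= t <= 1 -> F s t <= F s' t + K * Rabs (s - s')) ->
  exists s0 t0, 0 <= s0 <= 1 /\ 0 <= t0 <= 1 /\
    forall s t, 0 <= s <= 1 -> 0 <= t <= 1 -> F s0 t0 <= F s t.
Proof.
  intros HK Hcont Hlip.
  assert (Hmin : forall s, exists t0, 0 <= t0 <= 1 /\ forall t, 0 <= t <= 1 -> F s t0 <= F s t).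
  { intros s. destruct (continuity_ab_min (F s) 0 1 ltac:(lra)) as [t0 [H1 H2]].
    - intros c _. apply Hcont.
    - exists t0; split; auto. }
  set (tm := fun s => proj1_sig (constructive_indefinite_description _ (Hmin s))).
  assert (Htm : forall s, 0 <= tm s <= 1 /\ forall t, 0 <= t <= 1 -> F s (tm s) <= F s t).
  { intros s. unfold tm. destruct (constructive_indefinite_description _ (Hmin s)). auto. }
  set (h := fun s => F s (tm s)).
  assert (Hhlip : forall s s', Rabs s <= 2 -> Rabs s' <= 2 -> h s <= h s' + K * Rabs (s - s')).
  { intros s s' Hs Hs'. unfold h. destruct (Htm s) as [_ H1]. destruct (Htm s') as [H2 _].
    specialize (H1 (tm s') H2). assert (H3 := Hlip s s' (tm s') Hs Hs' H2). lra. }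
  destruct (continuity_ab_min h 0 1 ltac:(lra)) as [sm [Hsm1 Hsm2]].
  - intros c Hc. apply (lipschitz_continuity_pt h c K HK). intros x Hx.
    assert (Rabs c <= 2) by (rewrite Rabs_pos_eq; lra).
    assert (Rabs x <= 2).
    { unfold Rabs in Hx |- *. destruct (Rcase_abs (x - c)), (Rcase_abs x); lra. }
    assert (A1 := Hhlip x c ltac:(auto) ltac:(auto)). assert (A2 := Hhlip c x ltac:(auto) ltac:(auto)).
    rewrite <- Rabs_Ropp, Ropp_minus_distr in A2. apply Rabs_le. lra.
  - exists sm, (tm sm). destruct (Htm sm) as [Ht1 _]. split; auto. split; auto.
    intros s t Hs Ht. destruct (Htm s) as [_ H1]. specialize (H1 t Ht). specialize (Hsm1 s Hs).
    unfold h in *. lra.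
Qed.

Lemma segments_dist_pos n P e Q f :
  (forall s t, 0 <= s <= 1 -> 0 <= t <= 1 -> exists k, (k < n)%nat /\ line_pt P e s k <> line_pt Q f t k) ->
  exists d, 0 < d /\ forall s t, 0 <= s <= 1 -> 0 <= t <= 1 -> d <= dist n (line_pt P e s) (line_pt Q f t).
Proof.
  intros Hne.
  set (D := vsub P Q).
  set (F := fun s t => dot n D D + s * s * dot n e e + t * t * dot n f f
                       + 2 * s * dot n D e - 2 * t * dot n D f - 2 * s * t * dot n e f).
  assert (HF : forall s t, dist n (line_pt P e s) (line_pt Q f t) = sqrt (F s t)).
  { intros. unfold dist, norm.
    rewrite (dot_ext n _ (fun i => 1 * D i + s * e i + (- t) * f i) _ (fun i => 1 * D i + s * e i + (- t) * f i))
      by (intros; unfold D, vsub, line_pt; ring).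
    rewrite dot_comb3. unfold F. f_equal. ring. }
  set (K := 1 + 4 * Rabs (dot n e e) + 2 * Rabs (dot n D e) + 2 * Rabs (dot n e f)).
  assert (HK : 0 < K).
  { unfold K. assert (H1 := Rabs_pos (dot n e e)). assert (H2 := Rabs_pos (dot n D e)).
    assert (H3 := Rabs_pos (dot n e f)). lra. }
  destruct (min_attained_square F K HK) as [s0 [t0 [Hs0 [Ht0 Hmin]]]].
  - intros s t. unfold F. reg.
  - intros s s' t Hs Hs' Ht. unfold F.
    set (a := dot n e e). set (b := dot n D e). set (g := dot n e f).
    assert (Hd : s * s * a + 2 * s * b - 2 * s * t * g - (s' * s' * a + 2 * s' * b - 2 * s' * t * g)
                 = (s - s') * ((s + s') * a + 2 * b - 2 * t * g)) by ring.
    assert (Rabs ((s - s') * ((s + s') * a + 2 * b - 2 * t * g)) <= K * Rabs (s - s')).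
    { rewrite Rabs_mult, Rmult_comm. apply Rmult_le_compat_r; [apply Rabs_pos|].
      unfold Rminus. eapply Rle_trans; [apply Rabs_triang|].
      eapply Rle_trans; [apply Rplus_le_compat_r, Rabs_triang|].
      rewrite Rabs_Ropp, !Rabs_mult, (Rabs_pos_eq 2), (Rabs_pos_eq t) by lra.
      assert (Rabs (s + s') <= 4) by (eapply Rle_trans; [apply Rabs_triang| lra]).
      assert (Rabs (s + s') * Rabs a <= 4 * Rabs a) by (apply Rmult_le_compat_r; [apply Rabs_pos|lra]).
      assert (2 * t * Rabs g <= 2 * Rabs g) by (assert (Hg0 := Rabs_pos g); nra).
      unfold K; fold a b g. lra. }
    assert (Hle := Rle_abs ((s - s') * ((s + s') * a + 2 * b - 2 * t * g))). lra.
  - exists (sqrt (F s0 t0)). split.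
    + rewrite <- HF. unfold dist. apply norm_pos.
      destruct (Hne s0 t0 Hs0 Ht0) as [k [Hk Hk2]]. exists k. split; auto. unfold vsub. lra.
    + intros s t Hs Ht. rewrite HF. apply sqrt_le_1_alt. auto.
Qed.

Lemma adjacent_dist_lower n e f : 0 < norm n e -> 0 < norm n f ->
  exists c, 0 < c /\ forall P a b (x w : pt), (forall k, x k = P k + a * e k) -> (forall k, w k = P k + b * f k) ->
    ~ (exists al, forall k, (k < n)%nat -> w k = x k + al * e k) -> c * Rabs a <= dist n x w.
Proof.
  intros He Hf. assert (Hff := dot_self_pos _ _ Hf).
  destruct (Gram_nonneg n e f) as [HG|HG].
  - exists (sqrt (Gram n e f / dot n f f)). split.
    + apply sqrt_lt_R0. apply Rdiv_pos_pos; auto.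
    + intros P a b x w Hx Hw _. unfold dist, norm.
      rewrite (dot_ext n (vsub x w) (fun i => a * e i + (- b) * f i) (vsub x w) (fun i => a * e i + (- b) * f i))
        by (intros; unfold vsub; rewrite Hx, Hw; ring).
      rewrite Rmult_comm, <- (sqrt_Rsqr_abs a), <- sqrt_mult_alt by apply Rle_0_sqr.
      apply sqrt_le_1_alt. unfold Rsqr.
      replace (a * a * (Gram n e f / dot n f f)) with (a ^ 2 * Gram n e f / dot n f f) by (field; lra).
      apply Gram_le_dist_comb; auto.
  - exists 1. split; [lra|]. intros P a b x w Hx Hw Hn. exfalso. apply Hn.
    assert (Hpar := Gram_eq0_parallel n e f Hff (eq_sym HG)).
    set (mu := dot n e f / dot n f f) in *.
    assert (Hmu : mu <> 0).
    { intros H0. assert (norm n e = 0) by (apply norm_eq0_of; intros k Hk; rewrite Hpar, H0 by auto; ring).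
      lra. }
    exists (- a + b / mu). intros k Hk. rewrite Hx, Hw, (Hpar k Hk). field. auto.
Qed.

(** * Simple polylines *)

Definition edge (v : nat -> pt) i : pt := vsub (v (S i)) (v i).

Definition adjacent_edges (v : nat -> pt) m i j : Prop :=
  j = S i \/ i = S j \/ (v m = v O /\ ((i = O /\ j = pred m) \/ (j = O /\ i = pred m))).

Definition simple_polyline n (v : nat -> pt) m : Prop :=
  (1 <= m)%nat /\ (forall i, (i <= m)%nat -> in_Rn n (v i)) /\ (forall i, (i < m)%nat -> v i <> v (S i)) /\
  (forall i j, (i < m)%nat -> (j < m)%nat -> i <> j -> adjacent_edges v m i j \/
     forall s t, 0 <= s <= 1 -> 0 <= t <= 1 -> seg_pt v i s <> seg_pt v j t).

Lemma edge_norm_pos n v m i : simple_polyline n v m -> (i < m)%nat -> 0 < norm n (edge v i).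
Proof.
  intros [_ [Hin [Hne _]]] Hi. apply (dist_pos n (v (S i)) (v i)); try apply Hin; try lia.
  intros H; apply (Hne i Hi); auto.
Qed.

Lemma seg_pt_in_Rn n v m i s : simple_polyline n v m -> (i < m)%nat -> in_Rn n (seg_pt v i s).
Proof.
  intros [_ [Hin _]] Hi k Hk. unfold seg_pt. rewrite (Hin i), (Hin (S i)); auto; try lia. ring.
Qed.

Lemma simple_arc_polyline n X : simple_arc n X ->
  exists v m, simple_polyline n v m /\ (forall x, X x <-> polyline v m x).
Proof.
  intros [v [m [Hm [Hin [Hne [Hinj HX]]]]]]. exists v, m. split; auto. do 3 (split; auto).
  intros i j Hi Hj Hij. destruct (classic (adjacent_edges v m i j)) as [Ha|Ha]; [left; auto| right].
  intros s t Hs Ht Heq. apply Ha.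
  destruct (Hinj i j s t Hi Hj Hs Ht Heq) as [[H1 _]|[[H1 _]|[H1 _]]]; [contradiction| left| right; left]; auto.
Qed.

Lemma simple_closed_polyline n X : simple_closed n X ->
  exists v m, simple_polyline n v m /\ (forall x, X x <-> polyline v m x).
Proof.
  intros [v [m [Hm [Hin [Hvm [Hne [Hinj HX]]]]]]]. exists v, m. split; auto. split; [lia|]. do 2 (split; auto).
  intros i j Hi Hj Hij. destruct (classic (adjacent_edges v m i j)) as [Ha|Ha]; [left; auto| right].
  intros s t Hs Ht Heq. apply Ha.
  destruct (Hinj i j s t Hi Hj Hs Ht Heq)
    as [[H1 _]|[[H1 _]|[[H1 _]|[[H1 [H2 _]]|[H1 [H2 _]]]]]];
    [contradiction| left| right; left| right; right| right; right]; auto.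
Qed.

Definition edge_sep n (v : nat -> pt) i j c : Prop := forall s t, 0 <= s <= 1 -> 0 <= t <= 1 ->
  ~ (exists al, forall k, (k < n)%nat -> seg_pt v j t k = seg_pt v i s k + al * edge v i k) ->
  c * Rmin s (1 - s) <= dist n (seg_pt v i s) (seg_pt v j t).

Lemma edge_sep_weaken n v i j c c' : 0 < c' <= c -> edge_sep n v i j c -> edge_sep n v i j c'.
Proof.
  intros Hc H s t Hs Ht Hn. specialize (H s t Hs Ht Hn).
  assert (0 <= Rmin s (1 - s)) by (apply Rmin_glb; lra). nra.
Qed.

Lemma edge_sep_exists n v m i j : simple_polyline n v m -> (i < m)%nat -> (j < m)%nat -> i <> j ->
  exists c, 0 < c /\ edge_sep n v i j c.
Proof.
  intros HP Hi Hj Hij. assert (HP' := HP). destruct HP' as [Hm [Hin [Hne Hadj]]].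
  assert (Hei := edge_norm_pos n v m i HP Hi). assert (Hej := edge_norm_pos n v m j HP Hj).
  assert (Hmin_s : forall s, 0 <= s <= 1 -> Rmin s (1 - s) <= Rabs s).
  { intros s Hs. rewrite Rabs_pos_eq by lra. apply Rmin_l. }
  assert (Hmin_1s : forall s, 0 <= s <= 1 -> Rmin s (1 - s) <= Rabs (s - 1)).
  { intros s Hs. rewrite Rabs_left1 by lra. assert (H1 := Rmin_r s (1 - s)). lra. }
  destruct (Hadj i j Hi Hj Hij) as [[Ha|[Ha|[Hvm [[Ha1 Ha2]|[Ha1 Ha2]]]]] | Hdis].
  - subst j. destruct (adjacent_dist_lower n (edge v i) (edge v (S i)) Hei Hej) as [c [Hc Hb]].
    exists c. split; auto. intros s t Hs Ht Hn.
    eapply Rle_trans; [| apply (Hb (v (S i)) (s - 1) t); auto].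
    + apply Rmult_le_compat_l; [lra| auto].
    + intros k. unfold seg_pt, edge, vsub. ring.
  - subst i. destruct (adjacent_dist_lower n (edge v (S j)) (edge v j) Hei Hej) as [c [Hc Hb]].
    exists c. split; auto. intros s t Hs Ht Hn.
    eapply Rle_trans; [| apply (Hb (v (S j)) s (t - 1)); auto].
    + apply Rmult_le_compat_l; [lra| auto].
    + intros k. unfold seg_pt, edge, vsub. ring.
  - subst i j. destruct (adjacent_dist_lower n (edge v O) (edge v (pred m)) Hei Hej) as [c [Hc Hb]].
    exists c. split; auto. intros s t Hs Ht Hn.
    eapply Rle_trans; [| apply (Hb (v O) s (t - 1)); auto].
    + apply Rmult_le_compat_l; [lra| auto].
    + intros k. unfold seg_pt, edge, vsub. replace (S (pred m)) with m by lia. rewrite Hvm. ring.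
  - subst i j. destruct (adjacent_dist_lower n (edge v (pred m)) (edge v O) Hei Hej) as [c [Hc Hb]].
    exists c. split; auto. intros s t Hs Ht Hn.
    eapply Rle_trans; [| apply (Hb (v O) (s - 1) t); auto].
    + apply Rmult_le_compat_l; [lra| auto].
    + intros k. unfold seg_pt, edge, vsub. replace (S (pred m)) with m by lia. rewrite Hvm. ring.
  - destruct (segments_dist_pos n (v i) (edge v i) (v j) (edge v j)) as [d [Hd Hsep]].
    + intros s t Hs Ht.
      apply not_all_not_ex. intros H. apply (Hdis s t Hs Ht).
      apply (in_Rn_ext n); try (apply (seg_pt_in_Rn n v m); auto).
      intros k Hk. apply NNPP. intros E. apply (H k). auto.
    + exists d. split; auto. intros s t Hs Ht _.
      assert (Rmin s (1 - s) <= 1) by (assert (H1 := Rmin_l s (1 - s)); lra).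
      assert (0 <= Rmin s (1 - s)) by (apply Rmin_glb; lra).
      assert (Hst : d <= dist n (seg_pt v i s) (seg_pt v j t)) by exact (Hsep s t Hs Ht). nra.
Qed.

Lemma exists_pos_uniform (P : nat -> R -> Prop) m :
  (forall i c c', 0 < c' <= c -> P i c -> P i c') ->
  (forall i, (i < m)%nat -> exists c, 0 < c /\ P i c) -> exists c, 0 < c /\ forall i, (i < m)%nat -> P i c.
Proof.
  intros Hmono. induction m; intros H.
  - exists 1. split; [lra|]. intros; lia.
  - destruct IHm as [c1 [Hc1 H1]]; [intros; apply H; lia|].
    destruct (H m ltac:(lia)) as [c2 [Hc2 H2]].
    exists (Rmin c1 c2). split; [apply Rmin_pos; auto|].
    intros i Hi. destruct (Nat.eq_dec i m) as [->|].
    + apply Hmono with c2; auto. split; [apply Rmin_pos; auto| apply Rmin_r].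
    + apply Hmono with c1; [split; [apply Rmin_pos; auto| apply Rmin_l]| apply H1; lia].
Qed.

Lemma edge_sep_uniform n v m : simple_polyline n v m ->
  exists c, 0 < c /\ forall i j, (i < m)%nat -> (j < m)%nat -> i <> j -> edge_sep n v i j c.
Proof.
  intros HP.
  destruct (exists_pos_uniform (fun i c => forall j, (j < m)%nat -> i <> j -> edge_sep n v i j c) m)
    as [c [Hc H]]; [| |exists c; split; auto].
  - intros i c c' Hc' H j Hj Hij. apply edge_sep_weaken with c; auto.
  - intros i Hi. apply (exists_pos_uniform (fun j c => i <> j -> edge_sep n v i j c) m).
    + intros j c c' Hc' H Hij. apply edge_sep_weaken with c; auto.
    + intros j Hj. destruct (Nat.eq_dec i j).
      * exists 1. split; [lra|]. intros; contradiction.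
      * destruct (edge_sep_exists n v m i j HP Hi Hj n0) as [c [Hc H]]. exists c. split; auto.
Qed.

(** * Finiteness of U_p for p < 1 *)

Lemma Rpower_inv_lt x y p : 0 < p -> 0 < x -> 0 < y -> x < Rpower y p -> Rpower x (/ p) < y.
Proof.
  intros Hp Hx Hy H. destruct (Rlt_le_dec (Rpower x (/ p)) y) as [|Hle]; auto. exfalso.
  assert (Rpower y p <= Rpower (Rpower x (/ p)) p) by (apply Rle_Rpower_l; lra).
  rewrite Rpower_mult, Rinv_l, Rpower_1 in H0 by lra. lra.
Qed.

(* One of y, z lies off the line of the edge of x (else the curvature vanishes),
   and the curvature is at most 2 / (its distance to x). *)
Lemma curv_le_edge_sep n v m c i s y z : simple_polyline n v m -> 0 < c ->
  (forall i j, (i < m)%nat -> (j < m)%nat -> i <> j -> edge_sep n v i j c) ->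
  (i < m)%nat -> 0 <= s <= 1 -> polyline v m y -> polyline v m z ->
  seg_pt v i s <> y -> y <> z -> seg_pt v i s <> z -> 0 < curv n (seg_pt v i s) y z ->
  c * Rmin s (1 - s) * curv n (seg_pt v i s) y z <= 2.
Proof.
  intros HP Hc Hsep Hi Hs [j1 [t1 [Hj1 [Ht1 ->]]]] [j2 [t2 [Hj2 [Ht2 ->]]]] Hxy Hyz Hxz Hcp.
  set (x := seg_pt v i s) in *. set (y := seg_pt v j1 t1) in *. set (z := seg_pt v j2 t2) in *.
  assert (Hxin : in_Rn n x) by (apply (seg_pt_in_Rn n v m); auto).
  assert (Hyin : in_Rn n y) by (apply (seg_pt_in_Rn n v m); auto).
  assert (Hzin : in_Rn n z) by (apply (seg_pt_in_Rn n v m); auto).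
  assert (Dxy := dist_pos n x y Hxin Hyin Hxy).
  assert (Dyz := dist_pos n y z Hyin Hzin Hyz).
  assert (Dzx := dist_pos n z x Hzin Hxin (fun H => Hxz (eq_sym H))).
  set (L := fun w : pt => exists al, forall k, (k < n)%nat -> w k = x k + al * edge v i k).
  assert (HLseg : forall t', L (seg_pt v i t')).
  { intros t'. exists (t' - s). intros k Hk. unfold x, seg_pt, edge, vsub. ring. }
  assert (Hoff : forall j t, (j < m)%nat -> 0 <= t <= 1 -> ~ L (seg_pt v j t) ->
            c * Rmin s (1 - s) <= dist n x (seg_pt v j t)).
  { intros j t Hj Ht HL. apply Hsep; auto. intros ->. apply HL, HLseg. }
  assert (Hw : exists D, 0 < D /\ c * Rmin s (1 - s) <= D /\ curv n x y z <= 2 / D).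
  { destruct (classic (L y)) as [[a1 Ha1]|HLy].
    - destruct (classic (L z)) as [[a2 Ha2]|HLz].
      + rewrite (curv_collinear n x y z (edge v i) a1 a2 Ha1 Ha2) in Hcp. lra.
      + exists (dist n z x). split; auto. split.
        * rewrite dist_comm. apply Hoff; auto.
        * apply curv_le_inv_dist_zx; auto.
    - exists (dist n x y). split; auto. split.
      + apply Hoff; auto.
      + apply curv_le_inv_dist_xy; auto. }
  destruct Hw as [D [HD [HcD Hcurv]]].
  assert (Hmn : 0 <= Rmin s (1 - s)) by (apply Rmin_glb; lra).
  apply Rle_trans with (D * curv n x y z); [apply Rmult_le_compat_r; lra|].
  apply Rmult_le_compat_l with (r := D) in Hcurv; [|lra].
  replace (D * (2 / D)) with 2 in Hcurv by (field; lra). lra.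
Qed.

Lemma superlevel_near_vertex n v m (X : pt -> Prop) p c t x :
  simple_polyline n v m -> (forall x, X x <-> polyline v m x) -> 0 < c ->
  (forall i j, (i < m)%nat -> (j < m)%nat -> i <> j -> edge_sep n v i j c) ->
  0 < p -> 0 < t -> superlevel n X p t x ->
  exists i s, (i < m)%nat /\ 0 <= s <= 1 /\ x = seg_pt v i s /\ Rmin s (1 - s) < 2 / (c * Rpower t (/ p)).
Proof.
  intros HP HX Hc Hsep Hp Ht [Hx [y [z [Hy [Hz [Hxy [Hyz [Hxz [Hcp Htc]]]]]]]]].
  apply HX in Hx, Hy, Hz. destruct Hx as [i [s [Hi [Hs ->]]]].
  exists i, s. split; auto. split; auto. split; auto.
  assert (Hb := curv_le_edge_sep n v m c i s y z HP Hc Hsep Hi Hs Hy Hz Hxy Hyz Hxz Hcp).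
  assert (Hrt := Rpower_inv_lt t (curv n (seg_pt v i s) y z) p Hp Ht Hcp Htc).
  assert (HR : 0 < Rpower t (/ p)) by apply Rpower_pos.
  assert (Hmn : 0 <= Rmin s (1 - s)) by (apply Rmin_glb; lra).
  apply Rmult_lt_reg_r with (c * Rpower t (/ p)); [apply Rmult_lt_0_compat; auto|].
  replace (2 / (c * Rpower t (/ p)) * (c * Rpower t (/ p))) with 2 by (field; lra).
  destruct Hmn as [Hmn|<-]; [|lra].
  apply Rlt_le_trans with (c * Rmin s (1 - s) * curv n (seg_pt v i s) y z); auto.
  replace (Rmin s (1 - s) * (c * Rpower t (/ p))) with (c * Rmin s (1 - s) * Rpower t (/ p)) by ring.
  apply Rmult_lt_compat_l; auto. apply Rmult_lt_0_compat; auto.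
Qed.

Definition polyline_length n (v : nat -> pt) m : R := rsum m (fun i => norm n (edge v i)).

Lemma polyline_length_nonneg n v m : 0 <= polyline_length n v m.
Proof. apply rsum_nonneg. intros; apply sqrt_pos. Qed.

Lemma H1_le_edges n v m (a : nat -> R) (A : nat -> pt -> Prop) :
  (forall i, (i < m)%nat -> H1_le n (A i) (a i * norm n (edge v i))) -> (forall i, 0 <= a i) ->
  H1_le n (fun x => exists i, (i < m)%nat /\ A i x) (rsum m (fun i => a i * norm n (edge v i))).
Proof.
  intros H Ha. apply H1_le_bigunion; auto.
  intros i _. apply Rmult_le_pos; [apply Ha| apply sqrt_pos].
Qed.

Lemma H1_le_polyline n v m : H1_le n (polyline v m) (polyline_length n v m).
Proof.
  unfold polyline_length. rewrite (rsum_ext m _ (fun i => (1 - 0) * norm n (edge v i))) by (intros; ring).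
  apply H1_le_subset with (fun x => exists i, (i < m)%nat /\
                             exists s, 0 <= s <= 1 /\ x = line_pt (v i) (edge v i) s).
  - intros x [i [s [Hi [Hs ->]]]]. exists i. split; auto. exists s. auto.
  - apply (H1_le_edges n v m (fun _ => 1 - 0)); [intros i Hi; apply H1_le_segment; lra| intros; lra].
Qed.

Lemma H1_le_superlevel n v m (X : pt -> Prop) p c t :
  simple_polyline n v m -> (forall x, X x <-> polyline v m x) -> 0 < c ->
  (forall i j, (i < m)%nat -> (j < m)%nat -> i <> j -> edge_sep n v i j c) -> 0 < p -> 0 < t ->
  H1_le n (superlevel n X p t) (4 * polyline_length n v m / c * Rpower t (- / p)).
Proof.
  intros HP HX Hc Hsep Hp Ht.
  set (eta := 2 / (c * Rpower t (/ p))).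
  assert (Heta : 0 < eta) by (apply Rdiv_pos_pos; [lra| apply Rmult_lt_0_compat; auto; apply Rpower_pos]).
  replace (4 * polyline_length n v m / c * Rpower t (- / p))
    with (rsum m (fun i => (eta - 0 + (1 - (1 - eta))) * norm n (edge v i))).
  - apply H1_le_subset with (fun x => exists i, (i < m)%nat /\
        ((exists s, 0 <= s <= eta /\ x = line_pt (v i) (edge v i) s) \/
         (exists s, 1 - eta <= s <= 1 /\ x = line_pt (v i) (edge v i) s))).
    + intros x Hx.
      destruct (superlevel_near_vertex n v m X p c t x HP HX Hc Hsep Hp Ht Hx) as [i [s [Hi [Hs [-> Hmn]]]]].
      exists i. split; auto. fold eta in Hmn. unfold Rmin in Hmn. destruct (Rle_dec s (1 - s)).
      * left. exists s. split; auto. lra.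
      * right. exists s. split; auto. lra.
    + apply H1_le_edges; [|intros; lra].
      intros i Hi. rewrite Rmult_plus_distr_r. apply H1_le_union; apply H1_le_segment; lra.
  - rewrite (rsum_ext m _ (fun i => (2 * eta) * norm n (edge v i))) by (intros; ring).
    rewrite rsum_scal. fold (polyline_length n v m). unfold eta. rewrite Rpower_Ropp.
    field. split; [|lra]. assert (H := Rpower_pos t (/ p)). lra.
Qed.

Lemma Up_finite_simple_polyline n v m (X : pt -> Prop) p :
  simple_polyline n v m -> (forall x, X x <-> polyline v m x) -> 0 < p -> p < 1 -> Up_finite n X p.
Proof.
  intros HP HX Hp Hp1.
  destruct (edge_sep_uniform n v m HP) as [c [Hc Hsep]].
  set (Lam := polyline_length n v m). assert (HLam : 0 <= Lam) by apply polyline_length_nonneg.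
  assert (Hq : 1 < / p) by (rewrite <- Rinv_1; apply Rinv_lt_contravar; lra).
  set (Kc := 4 * Lam / c). assert (HKc : 0 <= Kc) by (apply Rle_mult_inv_pos; lra).
  exists (Rpower 2 (/ p) * (Lam + Kc) / (/ p - 1)). intros k t cc Ht0 Hinc Hge.
  apply layer_sum_le_of_decay; auto.
  - apply Rmult_le_pos; [left; apply Rpower_pos| lra].
  - intros i Hi.
    assert (Ht : 0 < t (S i)).
    { assert (H := increasing_from_0_nonneg t Ht0 Hinc i). specialize (Hinc i). lra. }
    apply decay_of_two_bounds; auto; try lra; apply (H1_ge_le n (superlevel n X p (t (S i)))); auto.
    + apply H1_le_subset with (polyline v m); [intros x [Hx _]; apply HX; auto| apply H1_le_polyline].
    + apply (H1_le_superlevel n v m X p c); auto.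
Qed.

(** * Divergence of U_p at a corner for p >= 1 *)

(* Division by a zero distance yields 0 in Rocq, so positive curvature forces distinct points. *)
Lemma curv_pos_pairwise_distinct n x y z : 0 < curv n x y z -> x <> y /\ y <> z /\ x <> z.
Proof.
  intros H. rewrite curv_Gram in H. unfold Rdiv in H.
  repeat split; intros ->; rewrite dist_self in H;
    repeat (rewrite Rmult_0_l in H || rewrite Rmult_0_r in H); rewrite Rinv_0, Rmult_0_r in H; lra.
Qed.

Lemma Gram_pos_norms_pos n e f : 0 < Gram n e f ->
  0 < norm n e /\ 0 < norm n f /\ 0 < norm n (fun k => e k + f k).
Proof.
  intros HG. unfold Gram in HG.
  assert (Hee := dot_self_nonneg n e). assert (Hff := dot_self_nonneg n f).
  unfold norm. repeat split; apply sqrt_lt_R0.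
  - destruct Hee as [|He]; auto. rewrite <- He in HG. nra.
  - destruct Hff as [|Hf]; auto. rewrite <- Hf in HG. nra.
  - rewrite (dot_ext n _ (fun k => 1 * e k + 1 * f k) _ (fun k => 1 * e k + 1 * f k)) by (intros; ring).
    rewrite dot_comb2.
    assert (0 <= (dot n e e - dot n f f) ^ 2) by apply pow2_ge_0.
    destruct (Rlt_le_dec 0 (dot n e e + 2 * dot n e f + dot n f f)) as [|Hs]; [lra|].
    assert (Hef : - 2 * dot n e f - (dot n e e + dot n f f) >= 0) by lra.
    nra.
Qed.

Lemma corner_in_superlevel n v m (X : pt -> Prop) p i t al :
  (forall x, polyline v m x -> X x) -> (S i < m)%nat -> 0 < Gram n (edge v i) (edge v (S i)) ->
  0 < p -> 0 < t -> 0 < al <= 1 -> al * Rpower t (/ p) < corner_curv n (edge v i) (edge v (S i)) ->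
  superlevel n X p t (line_pt (v (S i)) (fun k => - edge v i k) al).
Proof.
  intros HX Hi HG Hp Ht Hal Hal2.
  set (e := edge v i) in *. set (f := edge v (S i)) in *. set (K := corner_curv n e f) in *.
  destruct (Gram_pos_norms_pos n e f HG) as [He [Hf Hg]].
  assert (Hcurv := curv_corner n (v (S i)) e f al ltac:(lra) He Hf Hg). fold K in Hcurv.
  assert (HRt : 0 < Rpower t (/ p)) by apply Rpower_pos.
  assert (HcP : Rpower t (/ p) < K / al).
  { apply Rmult_lt_reg_r with al; [lra|]. replace (K / al * al) with K by (field; lra). lra. }
  assert (HKal : 0 < K / al) by lra.
  rewrite <- Hcurv in HKal, HcP.
  destruct (curv_pos_pairwise_distinct n _ _ _ HKal) as [Hxy [Hyz Hxz]].
  split; [| exists (v (S i)), (line_pt (v (S i)) f al)].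
  - apply HX. exists i, (1 - al). repeat split; try lia; try lra.
    apply functional_extensionality. intros k. unfold line_pt, seg_pt, e, edge, vsub. ring.
  - split; [apply HX; exists (S i), 0; repeat split; try lia; try lra|].
    { apply functional_extensionality. intros k. unfold seg_pt. ring. }
    split; [apply HX; exists (S i), al; repeat split; try lia; try lra; auto|].
    do 4 (split; auto).
    replace t with (Rpower (Rpower t (/ p)) p) at 1 by (rewrite Rpower_mult, Rinv_l, Rpower_1; lra).
    apply Rlt_Rpower_l; lra.
Qed.

(* The first vertices of the corner triangles with parameter al < eta fill a
   segment of length eta |e|. *)
Lemma H1_superlevel_corner_ge n v m (X : pt -> Prop) p i :
  (forall x, polyline v m x -> X x) -> (S i < m)%nat -> Gram n (edge v i) (edge v (S i)) <> 0 -> 0 < p ->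
  exists K E, 0 < K /\ 0 < E /\ forall t, 0 < t ->
    H1_ge n (superlevel n X p t) (Rmin 1 (K / Rpower t (/ p)) * E / 2).
Proof.
  intros HX Hi HG0 Hp.
  assert (HG : 0 < Gram n (edge v i) (edge v (S i))) by (destruct (Gram_nonneg n (edge v i) (edge v (S i))); auto; lra).
  destruct (Gram_pos_norms_pos n _ _ HG) as [He [Hf Hg]].
  set (K := corner_curv n (edge v i) (edge v (S i))).
  assert (HK : 0 < K).
  { apply Rdiv_pos_pos; [assert (H := sqrt_lt_R0 _ HG); lra|].
    repeat apply Rmult_lt_0_compat; auto. }
  exists K, (norm n (edge v i)). split; auto. split; auto. intros t Ht.
  set (eta := Rmin 1 (K / Rpower t (/ p))).
  assert (HRt : 0 < Rpower t (/ p)) by apply Rpower_pos.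
  assert (Heta : 0 < eta) by (apply Rmin_pos; [lra| apply Rdiv_pos_pos; auto]).
  assert (Hne : norm n (fun k => - edge v i k) = norm n (edge v i)).
  { rewrite (norm_ext n _ (fun k => (-1) * edge v i k)) by (intros; ring). rewrite norm_scal, Rabs_left; lra. }
  apply H1_ge_subset with (fun x => exists al, 0 < al < eta /\ x = line_pt (v (S i)) (fun k => - edge v i k) al).
  - intros x [al [Hal ->]]. apply (corner_in_superlevel n v m X p i t al); auto.
    + split; [lra|]. assert (H := Rmin_l 1 (K / Rpower t (/ p))). fold eta in H. lra.
    + assert (H := Rmin_r 1 (K / Rpower t (/ p))). fold eta in H. fold K.
      apply Rlt_le_trans with (K / Rpower t (/ p) * Rpower t (/ p)).
      * apply Rmult_lt_compat_r; lra.
      * right. field. lra.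
  - intros c' Hc' Hle. apply H1_segment_ge in Hle; [|rewrite Hne; auto| auto].
    rewrite Hne in Hle. lra.
Qed.

Lemma corner_level_ge K E p j : 0 < K -> 0 < E -> 1 <= p -> 1 <= j ->
  Rmin 1 K * E / 2 * / j <= Rmin 1 (K / Rpower j (/ p)) * E / 2.
Proof.
  intros HK HE Hp Hj.
  assert (Hpw : Rpower j (/ p) <= j).
  { rewrite <- (Rpower_1 j) at 2 by lra. apply Rle_Rpower; auto.
    rewrite <- Rinv_1. apply Rinv_le_contravar; lra. }
  assert (Hpp := Rpower_pos j (/ p)).
  assert (HKj : K / j <= K / Rpower j (/ p)) by (apply Rmult_le_compat_l; [lra| apply Rinv_le_contravar; auto]).
  assert (Hmin : Rmin 1 K / j <= Rmin 1 (K / j)).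
  { assert (Hj0 : 0 < / j) by (apply Rinv_0_lt_compat; lra).
    assert (Hj1 : / j <= 1) by (rewrite <- Rinv_1; apply Rinv_le_contravar; lra).
    unfold Rmin, Rdiv in *. destruct (Rle_dec 1 K), (Rle_dec 1 (K * / j)); nra. }
  assert (Rmin 1 (K / j) <= Rmin 1 (K / Rpower j (/ p))).
  { unfold Rmin. destruct (Rle_dec 1 (K / j)), (Rle_dec 1 (K / Rpower j (/ p))); lra. }
  replace (Rmin 1 K * E / 2 * / j) with ((Rmin 1 K / j) * (E / 2)) by (unfold Rdiv; ring).
  replace (Rmin 1 (K / Rpower j (/ p)) * E / 2) with (Rmin 1 (K / Rpower j (/ p)) * (E / 2)) by (unfold Rdiv; ring).
  apply Rmult_le_compat_r; lra.
Qed.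

(* Take the levels t_j = j: the layer-cake sum dominates a multiple of the harmonic series. *)
Lemma corner_Up_infinite n v m (X : pt -> Prop) p i :
  (forall x, polyline v m x -> X x) -> (S i < m)%nat -> Gram n (edge v i) (edge v (S i)) <> 0 -> 1 <= p ->
  ~ Up_finite n X p.
Proof.
  intros HX Hi HG Hp [M HM].
  destruct (H1_superlevel_corner_ge n v m X p i HX Hi HG ltac:(lra)) as [K [E [HK [HE Hge]]]].
  set (C0 := Rmin 1 K * E / 2).
  assert (HC0 : 0 < C0) by (unfold C0; assert (0 < Rmin 1 K) by (apply Rmin_pos; lra); nra).
  destruct (harmonic_unbounded (M / C0)) as [k Hk].
  set (c := fun j : nat => Rmin 1 (K / Rpower (INR j) (/ p)) * E / 2).
  assert (Hs := HM k INR c ltac:(reflexivity) ltac:(intros; rewrite S_INR; lra)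
     ltac:(intros j _; apply Hge; apply lt_0_INR; lia)).
  assert (C0 * rsum k (fun i => / INR (S i)) <= rsum k (fun i => (INR (S i) - INR i) * c (S i))).
  { rewrite <- rsum_scal. apply rsum_le. intros j _.
    replace (INR (S j) - INR j) with 1 by (rewrite S_INR; ring). rewrite Rmult_1_l.
    apply corner_level_ge; auto. rewrite S_INR. assert (H := pos_INR j). lra. }
  apply Rmult_lt_compat_l with (r := C0) in Hk; auto.
  replace (C0 * (M / C0)) with M in Hk by (field; lra). lra.
Qed.

(* Consecutive edges with vanishing Gram determinant are parallel, so all vertices
   lie on the line through v 0 in the direction of the first edge. *)
Lemma polyline_collinear_of_flat n v m : simple_polyline n v m ->
  (forall i, (S i < m)%nat -> Gram n (edge v i) (edge v (S i)) = 0) ->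
  exists a d : pt, forall x, polyline v m x -> exists l : R, forall k, x k = a k + l * d k.
Proof.
  intros HP Hflat. assert (HP' := HP). destruct HP' as [Hm [Hin [Hne _]]].
  assert (Hedge0 : forall j, (j < m)%nat -> forall k, (n <= k)%nat -> edge v j k = 0).
  { intros j Hj k Hk. unfold edge, vsub. rewrite (Hin j), (Hin (S j)); auto; try lia. ring. }
  assert (Hpar : forall j, (j < m)%nat -> exists mu, forall k, edge v j k = mu * edge v O k).
  { induction j; intros Hj; [exists 1; intros; ring|].
    destruct IHj as [mu Hmu]; [lia|].
    assert (Hf := dot_self_pos _ _ (edge_norm_pos n v m (S j) HP Hj)).
    assert (He := edge_norm_pos n v m j HP ltac:(lia)).
    assert (Hj' := Gram_eq0_parallel n (edge v j) (edge v (S j)) Hf (Hflat j Hj)).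
    set (mu' := dot n (edge v j) (edge v (S j)) / dot n (edge v (S j)) (edge v (S j))) in *.
    assert (Hmu' : mu' <> 0).
    { intros H0. assert (norm n (edge v j) = 0) by (apply norm_eq0_of; intros k Hk; rewrite Hj', H0 by auto; ring).
      lra. }
    exists (mu / mu'). intros k. destruct (Nat.lt_ge_cases k n) as [Hk|Hk].
    + assert (H1 := Hj' k Hk). rewrite Hmu in H1. apply (Rmult_eq_reg_l mu'); auto.
      rewrite <- H1. field. auto.
    + rewrite (Hedge0 (S j) Hj k Hk), (Hedge0 O ltac:(lia) k Hk). ring. }
  assert (Hvert : forall j, (j <= m)%nat -> exists la, forall k, v j k = v O k + la * edge v O k).
  { induction j; intros Hj; [exists 0; intros; ring|].
    destruct IHj as [la Hla]; [lia|]. destruct (Hpar j ltac:(lia)) as [mu Hmu].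
    exists (la + mu). intros k. replace (v (S j) k) with (v j k + edge v j k) by (unfold edge, vsub; ring).
    rewrite Hla, Hmu. ring. }
  exists (v O), (edge v O). intros x [j [s [Hj [Hs ->]]]].
  destruct (Hvert j ltac:(lia)) as [la Hla]. destruct (Hpar j Hj) as [mu Hmu].
  exists (la + s * mu). intros k. unfold seg_pt. change (v (S j) k - v j k) with (edge v j k).
  rewrite Hla, Hmu. ring.
Qed.

(** * Examples in the coordinate plane *)

Definition unit_x : pt := fun k => if Nat.eqb k 0 then 1 else 0.
Definition unit_y : pt := fun k => if Nat.eqb k 1 then 1 else 0.
Definition origin : pt := fun _ => 0.

Lemma unit_x_in_Rn n : (2 <= n)%nat -> in_Rn n unit_x.
Proof. intros Hn k Hk. unfold unit_x. destruct (Nat.eqb_spec k 0); [lia| auto]. Qed.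

Lemma unit_y_in_Rn n : (2 <= n)%nat -> in_Rn n unit_y.
Proof. intros Hn k Hk. unfold unit_y. destruct (Nat.eqb_spec k 1); [lia| auto]. Qed.

Lemma origin_in_Rn n : in_Rn n origin.
Proof. intros k _. reflexivity. Qed.

Definition right_angle (i : nat) : pt := match i with O => unit_x | 1%nat => origin | _ => unit_y end.
Definition triangle (i : nat) : pt := match i with 1%nat => unit_x | 2%nat => unit_y | _ => origin end.

Lemma dot_plane n u w : (2 <= n)%nat -> (forall k, (2 <= k)%nat -> u k = 0) ->
  dot n u w = u O * w O + u 1%nat * w 1%nat.
Proof.
  intros Hn Hu. induction Hn as [|m Hm IH]; unfold dot in *; simpl; [ring|].
  rewrite IH, (Hu m) by lia. ring.
Qed.

Ltac coordinate k H := let H' := fresh "C" in assert (H' := f_equal (fun f => f k) H); cbv beta in H';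
  unfold seg_pt, right_angle, triangle, unit_x, unit_y, origin in H'; simpl in H'.

Lemma right_angle_simple_arc n : (2 <= n)%nat -> simple_arc n (polyline right_angle 2).
Proof.
  intros Hn. exists right_angle, 2%nat. split; [lia|]. split.
  { intros i Hi. destruct i as [|[|[|i]]];
      [apply unit_x_in_Rn| apply origin_in_Rn| apply unit_y_in_Rn| lia]; auto. }
  split.
  { intros i Hi H. destruct i as [|[|i]]; [coordinate 0%nat H| coordinate 1%nat H| lia]; lra. }
  split; [|tauto].
  intros i j s t Hi Hj Hs Ht H. coordinate 0%nat H. coordinate 1%nat H.
  destruct i as [|[|i]]; destruct j as [|[|j]]; try lia; simpl in *.
  - left. split; auto. lra.
  - right; left. repeat split; auto; lra.
  - right; right. repeat split; auto; lra.
  - left. split; auto. lra.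
Qed.

Lemma right_angle_corner n : (2 <= n)%nat -> Gram n (edge right_angle 0) (edge right_angle 1) <> 0.
Proof.
  intros Hn. unfold Gram.
  assert (Hz : forall u : pt, u = edge right_angle 0 \/ u = edge right_angle 1 ->
                 forall k, (2 <= k)%nat -> u k = 0).
  { intros u [->| ->] k Hk; unfold edge, vsub, right_angle, unit_x, unit_y, origin; simpl;
      destruct k as [|[|k]]; try lia; simpl; ring. }
  rewrite !dot_plane; auto; try (apply Hz; auto).
  unfold edge, vsub, right_angle, unit_x, unit_y, origin; simpl. lra.
Qed.

Lemma triangle_simple_closed n : (2 <= n)%nat -> simple_closed n (polyline triangle 3).
Proof.
  intros Hn. exists triangle, 3%nat. split; [lia|]. split.
  { intros i Hi. destruct i as [|[|[|[|i]]]];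
      [apply origin_in_Rn| apply unit_x_in_Rn| apply unit_y_in_Rn| apply origin_in_Rn| lia]; auto. }
  split; [reflexivity|]. split.
  { intros i Hi H. destruct i as [|[|[|i]]]; [coordinate 0%nat H| coordinate 1%nat H| coordinate 1%nat H| lia]; lra. }
  split; [|tauto].
  intros i j s t Hi Hj Hs Ht H. coordinate 0%nat H. coordinate 1%nat H.
  destruct i as [|[|[|i]]]; destruct j as [|[|[|j]]]; try lia; simpl in *.
  - left. split; auto. lra.
  - right; left. repeat split; auto; lra.
  - right; right; right; left. repeat split; auto; lra.
  - right; right; left. repeat split; auto; lra.
  - left. split; auto. lra.
  - right; left. repeat split; auto; lra.
  - right; right; right; right. repeat split; auto; lra.
  - right; right; left. repeat split; auto; lra.
  - left. split; auto. lra.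
Qed.

Lemma triangle_nondegenerate : nondegenerate (polyline triangle 3).
Proof.
  intros [a [d H]].
  destruct (H (seg_pt triangle 0 0)) as [l0 H0]; [exists O, 0; repeat split; auto; lra|].
  destruct (H (seg_pt triangle 0 1)) as [l1 H1]; [exists O, 1; repeat split; auto; lra|].
  destruct (H (seg_pt triangle 1 1)) as [l2 H2]; [exists 1%nat, 1; repeat split; auto; lra|].
  assert (A0 := H0 O). assert (A1 := H0 1%nat). assert (B0 := H1 O). assert (B1 := H1 1%nat).
  assert (C0 := H2 O). assert (C1 := H2 1%nat).
  unfold seg_pt, triangle, unit_x, unit_y, origin in *; simpl in *.
  assert (E1 : (l1 - l0) * d O = 1) by lra. assert (E2 : (l1 - l0) * d 1%nat = 0) by lra.
  assert (E3 : (l2 - l0) * d 1%nat = 1) by lra.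
  assert (Hl : l1 - l0 <> 0) by (intros Hz; rewrite Hz in E1; lra).
  assert (Hd : d 1%nat = 0) by (apply (Rmult_eq_reg_l (l1 - l0)); auto; lra).
  rewrite Hd in E3. lra.
Qed.

Lemma simple_polygon_polyline n X : simple_polygon n X ->
  exists v m, simple_polyline n v m /\ (forall x, X x <-> polyline v m x).
Proof. intros [Ha|Hc]; [apply simple_arc_polyline| apply simple_closed_polyline]; auto. Qed.

Lemma Up_finite_simple_polygon n X p : simple_polygon n X -> 0 < p -> p < 1 -> Up_finite n X p.
Proof.
  intros HX Hp Hp1. destruct (simple_polygon_polyline n X HX) as [v [m [HP HXv]]].
  apply (Up_finite_simple_polyline n v m); auto.
Qed.

(* A nondegenerate closed polygon has a genuine corner between consecutive edges. *)
Lemma nondegenerate_closed_Up_infinite n X p : simple_closed n X -> nondegenerate X -> 1 <= p ->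
  ~ Up_finite n X p.
Proof.
  intros Hc Hnd Hp. destruct (simple_closed_polyline n X Hc) as [v [m [HP HX]]].
  destruct (classic (exists i, (S i < m)%nat /\ Gram n (edge v i) (edge v (S i)) <> 0))
    as [[i [Hi HGi]]|Hflat].
  - apply (corner_Up_infinite n v m X p i); auto. intros x Hx; apply HX; auto.
  - exfalso. apply Hnd. destruct (polyline_collinear_of_flat n v m HP) as [a [d Had]].
    + intros i Hi. apply NNPP. intros HG. apply Hflat. exists i; auto.
    + exists a, d. intros x Hx. apply Had, HX; auto.
Qed.

Theorem mainTheorem3 (n : nat) (p : R) :
  (2 <= n)%nat -> 0 < p ->
  (p < 1 <-> (forall X, simple_polygon n X -> Up_finite n X p)) /\
  (p < 1 <-> (exists X, simple_closed n X /\ nondegenerate X /\ Up_finite n X p)).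
Proof.
  intros Hn Hp. split; split.
  - intros Hp1 X HX. apply Up_finite_simple_polygon; auto.
  - intros H. destruct (Rlt_le_dec p 1) as [|Hp1]; auto. exfalso.
    apply (corner_Up_infinite n right_angle 2 (polyline right_angle 2) p 0); auto.
    + apply right_angle_corner; auto.
    + apply H. left. apply right_angle_simple_arc; auto.
  - intros Hp1. exists (polyline triangle 3).
    assert (Ht := triangle_simple_closed n Hn).
    split; [auto| split; [apply triangle_nondegenerate| apply Up_finite_simple_polygon; [right|..]; auto]].
  - intros [X [Hc [Hnd Hup]]]. destruct (Rlt_le_dec p 1) as [|Hp1]; auto. exfalso.
    apply (nondegenerate_closed_Up_infinite n X p); auto.
Qed.
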